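(* Let $\theta$ be an infinite cardinal. (1) The logic $\mathbb L^1_{\le\theta}$ has dullness-elimination. (2) If $\tau$ is the empty vocabulary and $M_1,M_2$ are $\tau$-models (i.e. sets) of cardinality $>\theta$, then $M_1\,\mathscr E^1_{\mathrm{qf}(\tau),\theta,\alpha}\,M_2$ for every $\alpha<\theta^+$. (3) The conclusion of (2) also holds if $\mathrm{cf}(\theta)=\aleph_0$ and $\|M_1\|,\|M_2\|\ge\theta$.
   Context: A logic $\mathscr L$ has dullness-elimination if: whenever $\tau_1$ is a relational vocabulary (predicates only), $\tau_2=\tau_1\cup\{P\}$ with $P$ a new unary predicate, $\psi_2\in\mathscr L(\tau_2)$, and every model $M$ of $\psi_2$ has $P^M\ne\emptyset$ and $Q^M\subseteq(P^M)^{\mathrm{arity}(Q)}$ for all $Q\in\tau_1$, then there is $\psi_1\in\mathscr L(\tau_1)$ whose models are exactly the structures (up to isomorphism) $(M\restriction\tau_1)\restriction P^M$ (the substructure with universe $P^M$) for $M$ a model of $\psi_2$. The game $\Game_{\Gamma,\theta,\alpha}[M_1,M_2]$: states are tuples $(A^1,A^2,h^1,h^2,g,\beta,n)$ with $A^\ell\subseteq M_\ell$, $|A^\ell|\le\theta$, $\beta\le\alpha$, $n<\omega$, $h^\ell:A^\ell\to\omega$, $g$ a partial injection $M_1\to M_2$ with $g^1=g,g^2=g^{-1}$, $\mathrm{Dom}(g^\ell)\subseteq A^\ell$, $g$ preserving every formula of $\Gamma$, and $h^\ell(a)<n$ on $\mathrm{Dom}(g^\ell)$. Start: $(\emptyset,\emptyset,\emptyset,\emptyset,\emptyset,\alpha,0)$.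 At state $\mathbf s_n$, AIS picks $\iota\in\{1,2\}$, $\beta_{n+1}<\beta_n$, $A'$ with $A^\iota_n\subseteq A'\subseteq M_\iota$, $|A'|\le\theta$; ISO picks a state $\mathbf s_{n+1}$ with index $n+1$ and ordinal $\beta_{n+1}$ extending $\mathbf s_n$ coordinatewise, with $A^\iota_{n+1}=A'$, $A^{3-\iota}_{n+1}=A^{3-\iota}_n\cup\mathrm{Dom}(g^{3-\iota}_{n+1})$, $h^\iota_{n+1}(a)\ge n+1$ for new $a\in A'$, and $\mathrm{Dom}(g^\iota_{n+1})=\{a\in A^\iota_n:h^\iota_n(a)<n+1\}$. A player without legal move loses; for $\alpha=0$ ISO wins iff the start is a state. $\mathscr E^0$: ISO has a winning strategy; $\mathscr E^1$: generated equivalence relation; $\mathrm{qf}(\tau)$: atomic formulas (for empty $\tau$ only equalities) and negations. $\mathbb L^1_{\le\theta}$: a sentence of $\mathbb L^1_{\le\theta}(\tau)$ is given by $\tau_1\subseteq\tau$, $|\tau_1|\le\theta$, $\alpha<\theta^+$ and at most $\beth_{\alpha+1}(\theta)$ $\tau_1$-models $M_i$; $M\models\psi$ iff $M\restriction\tau_1\,\mathscr E^1_{\mathrm{qf}(\tau_1),\theta,\alpha}\,M_i$ for some $i$. *)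

(* Set-theoretic notions (cardinals, ordinals, beth numbers) are
   encoded via types: a cardinal theta is represented by a type Theta,
   "|X| <= theta" by an injection X -> Theta, an ordinal alpha < theta^+ by a
   strict well-order on a type injecting into Theta. *)
From Stdlib Require Import Relations Classical.
From Stdlib Require Vectors.Fin.

Definition inj {X Y : Type} (f : X -> Y) : Prop := forall x y, f x = f y -> x = y.

Definition card_le (X Y : Type) : Prop := exists f : X -> Y, inj f.

Definition small (Theta : Type) {X : Type} (P : X -> Prop) : Prop :=
  card_le {x : X | P x} Theta.

Definition infinite_card (Theta : Type) : Prop := card_le nat Theta.

(* cf(theta) = aleph_0 : theta is a countable union of sets of size < theta *)
Definition cof_omega (Theta : Type) : Prop :=
  exists S : nat -> Theta -> Prop,
    (forall t, exists k, S k t) /\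
    (forall k, card_le {t : Theta | S k t} Theta /\ ~ card_le Theta {t : Theta | S k t}).

Record wellorder (A : Type) (R : A -> A -> Prop) : Prop := {
  wo_wf : well_founded R;
  wo_trans : forall x y z, R x y -> R y z -> R x z;
  wo_total : forall x y, R x y \/ x = y \/ R y x }.

Record ordinal_lt_succ (Theta : Type) := {
  oA : Type;
  oR : oA -> oA -> Prop;
  o_wo : wellorder oA oR;
  o_small : card_le oA Theta }.
Arguments oA {Theta}.
Arguments oR {Theta}.
Arguments o_wo {Theta}.

(* ordinals <= alpha : [Some a] is the order type of the predecessors of a,
   [None] is alpha itself *)
Definition ord_le_lt {A : Type} (R : A -> A -> Prop) (b c : option A) : Prop :=
  match b, c with
  | Some x, Some y => R x y
  | Some _, None => True
  | None, _ => False
  end.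

(* beth_fam a is a type of cardinality beth_{otp(a)}(theta):
   B(a) = Theta + Sum_{b < a} P(B(b)) *)
Definition beth_fam (Theta : Type) {A : Type} {R : A -> A -> Prop}
  (wf : well_founded R) : A -> Type :=
  Fix wf (fun _ => Type)
    (fun a rec => (Theta + {b : A & {h : R b a & (rec b h -> Prop)}})%type).

(* a type of cardinality beth_alpha(theta) *)
Definition beth_top (Theta : Type) {A : Type} {R : A -> A -> Prop}
  (wf : well_founded R) : Type :=
  (Theta + {a : A & (beth_fam Theta wf a -> Prop)})%type.

(* a type of cardinality beth_{alpha+1}(theta) *)
Definition beth_succ (Theta : Type) {A : Type} {R : A -> A -> Prop}
  (wf : well_founded R) : Type :=
  beth_top Theta wf -> Prop.

(* a vocabulary is a type of predicate symbols V with arities ar *)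
Record structure (V : Type) (ar : V -> nat) := {
  carrier : Type;
  rel : forall s : V, (Fin.t (ar s) -> carrier) -> Prop }.
Arguments carrier {V ar}.
Arguments rel {V ar}.

Definition reduct {V : Type} {ar : V -> nat} (S : V -> Prop) (M : structure V ar)
  : structure {s : V | S s} (fun s => ar (proj1_sig s)) :=
  {| carrier := carrier M; rel := fun s t => rel M (proj1_sig s) t |}.

Definition isomorphic {V : Type} {ar : V -> nat} (M N : structure V ar) : Prop :=
  exists (f : carrier M -> carrier N) (g : carrier N -> carrier M),
    (forall x, g (f x) = x) /\ (forall y, f (g y) = y) /\
    (forall s (t : Fin.t (ar s) -> carrier M), rel M s t <-> rel N s (fun i => f (t i))).

Section Game.
Context (Theta : Type) {A : Type} (R : A -> A -> Prop)
        {V : Type} {ar : V -> nat} (M1 M2 : structure V ar).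

Record gstate := {
  gA1 : carrier M1 -> Prop;
  gA2 : carrier M2 -> Prop;
  gh1 : carrier M1 -> nat;
  gh2 : carrier M2 -> nat;
  gg  : carrier M1 -> carrier M2 -> Prop;  (* graph of the partial injection g *)
  gb  : option A;                          (* ordinal beta <= alpha *)
  gn  : nat }.

(* g preserves every formula of qf(tau): atomic formulas and their negations
   (equalities are preserved since g is injective) *)
Definition preserves_qf (g : carrier M1 -> carrier M2 -> Prop) : Prop :=
  forall s (a : Fin.t (ar s) -> carrier M1) (b : Fin.t (ar s) -> carrier M2),
    (forall i, g (a i) (b i)) -> (rel M1 s a <-> rel M2 s b).

Definition is_state (s : gstate) : Prop :=
  small Theta (gA1 s) /\ small Theta (gA2 s) /\
  (forall x y y', gg s x y -> gg s x y' -> y = y') /\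
  (forall x x' y, gg s x y -> gg s x' y -> x = x') /\
  (forall x y, gg s x y -> gA1 s x /\ gA2 s y) /\
  preserves_qf (gg s) /\
  (forall x y, gg s x y -> gh1 s x < gn s /\ gh2 s y < gn s).

Definition start : gstate :=
  {| gA1 := fun _ => False; gA2 := fun _ => False; gh1 := fun _ => 0;
     gh2 := fun _ => 0; gg := fun _ _ => False; gb := None; gn := 0 |}.

(* AIS's move: iota (true = 1, false = 2), beta' < beta_n, A' *)
Definition ais_legal1 (s : gstate) (b' : option A) (A' : carrier M1 -> Prop) : Prop :=
  ord_le_lt R b' (gb s) /\ (forall x, gA1 s x -> A' x) /\ small Theta A'.
Definition ais_legal2 (s : gstate) (b' : option A) (A' : carrier M2 -> Prop) : Prop :=
  ord_le_lt R b' (gb s) /\ (forall x, gA2 s x -> A' x) /\ small Theta A'.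

Definition extends (s s' : gstate) (b' : option A) : Prop :=
  gn s' = S (gn s) /\ gb s' = b' /\
  (forall x, gA1 s x -> gA1 s' x) /\ (forall y, gA2 s y -> gA2 s' y) /\
  (forall x, gA1 s x -> gh1 s' x = gh1 s x) /\
  (forall y, gA2 s y -> gh2 s' y = gh2 s y) /\
  (forall x y, gg s x y -> gg s' x y) /\
  is_state s'.

Definition iso_resp1 (s : gstate) (b' : option A) (A' : carrier M1 -> Prop) (s' : gstate) : Prop :=
  extends s s' b' /\
  (forall x, gA1 s' x <-> A' x) /\
  (forall y, gA2 s' y <-> (gA2 s y \/ exists x, gg s' x y)) /\
  (forall x, A' x -> ~ gA1 s x -> S (gn s) <= gh1 s' x) /\
  (forall x, (exists y, gg s' x y) <-> (gA1 s x /\ gh1 s x < S (gn s))).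

Definition iso_resp2 (s : gstate) (b' : option A) (A' : carrier M2 -> Prop) (s' : gstate) : Prop :=
  extends s s' b' /\
  (forall y, gA2 s' y <-> A' y) /\
  (forall x, gA1 s' x <-> (gA1 s x \/ exists y, gg s' x y)) /\
  (forall y, A' y -> ~ gA2 s y -> S (gn s) <= gh2 s' y) /\
  (forall y, (exists x, gg s' x y) <-> (gA2 s y /\ gh2 s y < S (gn s))).

(* ISO wins from state s: every legal AIS move has a legal answer from which
   ISO wins (the game is finite since the ordinals decrease; a player without
   legal move loses). *)
Inductive iso_wins : gstate -> Prop :=
| iso_wins_intro : forall s,
    (forall b' A', ais_legal1 s b' A' -> exists s', iso_resp1 s b' A' s' /\ iso_wins s') ->
    (forall b' A', ais_legal2 s b' A' -> exists s', iso_resp2 s b' A' s' /\ iso_wins s') ->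
    iso_wins s.

Definition E0 : Prop := is_state start /\ iso_wins start.
End Game.

Definition E1 (Theta : Type) {A : Type} (R : A -> A -> Prop) {V : Type} {ar : V -> nat}
  : structure V ar -> structure V ar -> Prop :=
  clos_refl_sym_trans (structure V ar) (fun M1 M2 => E0 Theta R M1 M2).

Record sentence (Theta : Type) (V : Type) (ar : V -> nat) := {
  s_sub : V -> Prop;
  s_sub_small : small Theta s_sub;
  s_ord : ordinal_lt_succ Theta;
  s_idx : Type;
  s_idx_small : card_le s_idx (beth_succ Theta (wo_wf _ _ (o_wo s_ord)));
                                                       (* at most beth_{alpha+1}(theta) models *)
  s_models : s_idx -> structure {s : V | s_sub s} (fun s => ar (proj1_sig s)) }.
Arguments s_sub {Theta V ar}.
Arguments s_ord {Theta V ar}.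
Arguments s_idx {Theta V ar}.
Arguments s_models {Theta V ar}.

Definition sat {Theta V : Type} {ar : V -> nat} (M : structure V ar)
  (psi : sentence Theta V ar) : Prop :=
  exists i : s_idx psi,
    E1 Theta (oR (s_ord psi)) (reduct (s_sub psi) M) (s_models psi i).

(* tau_2 = tau_1 + {P}, P = None of arity 1 *)
Definition ext_ar {V : Type} (ar : V -> nat) (o : option V) : nat :=
  match o with Some q => ar q | None => 1 end.

Definition predP {V : Type} {ar : V -> nat} (M : structure (option V) (ext_ar ar))
  (x : carrier M) : Prop :=
  rel M None (fun _ => x).

Definition relativize {V : Type} {ar : V -> nat} (M : structure (option V) (ext_ar ar))
  : structure V ar :=
  {| carrier := {x : carrier M | predP M x};
     rel := fun q t => rel M (Some q) (fun i => proj1_sig (t i)) |}.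

Definition dullness_elimination (Theta : Type) : Prop :=
  forall (V1 : Type) (ar1 : V1 -> nat) (psi2 : sentence Theta (option V1) (ext_ar ar1)),
    (forall M, sat M psi2 ->
       (exists x, predP M x) /\
       (forall q (t : Fin.t (ar1 q) -> carrier M), rel M (Some q) t -> forall i, predP M (t i))) ->
    exists psi1 : sentence Theta V1 ar1,
      forall N : structure V1 ar1,
        sat N psi1 <-> exists M, sat M psi2 /\ isomorphic N (relativize M).

Definition empty_ar (e : Empty_set) : nat := match e with end.

(* All game statements are proved by an invariant of states that ISO can maintain
   against every move of AIS; plays terminate since the ordinal coordinate decreases.

   (1) The new sentence keeps the ordinal of [psi2] and takes as models the
   relativizations to [P] of models realising the indices of [psi2].  This works
   because E^0 is preserved by relativizing to [P] and by adding new elements outside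
   [P], and holds between isomorphic structures; the last two facts are instances of
   one lemma: E^0 between [Z1] and [Z2] lifts to structures made of copies of [Z1],
   [Z2] and of remainders matched by a bijection.

   (2), (3) Every set of size at least theta is E^0-equivalent to the power set of
   theta (so (3) holds without the cofinality assumption).  On the large side ISO
   postpones preimages by reserving them in a copy of theta x omega inside the small
   side, level [m] serving elements of height [m + 1]; on the small side she picks
   images outside the small set played so far, by a diagonal argument. *)

From Stdlib Require Import Classical ClassicalEpsilon FunctionalExtensionality
  PropExtensionality ProofIrrelevance Lia Relations.
From Stdlib Require Cantor.

Lemma sig_eq {A : Type} {P : A -> Prop} (a b : {x | P x}) :
  proj1_sig a = proj1_sig b -> a = b.
Proof. apply eq_sig_hprop. intros; apply proof_irrelevance. Qed.

Definition classic_if {T : Type} (P : Prop) (a b : T) : T :=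
  if excluded_middle_informative P then a else b.

Lemma classic_if_true {T : Type} (P : Prop) (a b : T) : P -> classic_if P a b = a.
Proof. intro H. unfold classic_if. destruct (excluded_middle_informative P); tauto. Qed.

Lemma classic_if_false {T : Type} (P : Prop) (a b : T) : ~ P -> classic_if P a b = b.
Proof. intro H. unfold classic_if. destruct (excluded_middle_informative P); tauto. Qed.

Definition choice_fun {X Y : Type} {P : X -> Y -> Prop} (H : forall x, exists y, P x y)
  (x : X) : Y := proj1_sig (constructive_indefinite_description _ (H x)).

Lemma choice_fun_spec {X Y : Type} {P : X -> Y -> Prop} (H : forall x, exists y, P x y)
  (x : X) : P x (choice_fun H x).
Proof. exact (proj2_sig (constructive_indefinite_description _ (H x))). Qed.

Definition subpred {T : Type} (X Y : T -> Prop) := forall t, X t -> Y t.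
Definition is_chain {T : Type} (C : (T -> Prop) -> Prop) :=
  forall X Y, C X -> C Y -> subpred X Y \/ subpred Y X.
Definition chain_union {T : Type} (C : (T -> Prop) -> Prop) : T -> Prop :=
  fun t => exists X, C X /\ X t.

Lemma subpred_antisym {T : Type} (X Y : T -> Prop) : subpred X Y -> subpred Y X -> X = Y.
Proof.
  intros H1 H2. apply functional_extensionality; intro t.
  apply propositional_extensionality; split; auto.
Qed.

(* Zorn's lemma for families of predicates closed under unions of chains,
   via the tower of an inflationary map (Bourbaki-Witt). *)
Section Tower.
Context {T : Type} (g : (T -> Prop) -> (T -> Prop)) (g_infl : forall X, subpred X (g X)).

Inductive tower : (T -> Prop) -> Prop :=
| tower_step : forall X, tower X -> tower (g X)
| tower_union : forall C, (forall X, C X -> tower X) -> tower (chain_union C).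

Definition extreme (c : T -> Prop) :=
  forall Y, tower Y -> subpred Y c -> ~ subpred c Y -> subpred (g Y) c.

Lemma extreme_compare c : extreme c -> forall Y, tower Y -> subpred Y c \/ subpred (g c) Y.
Proof.
  intros Hc Y HY. induction HY as [Z HZ IH | C HC IH].
  - destruct IH as [H|H].
    + destruct (classic (subpred c Z)) as [H'|H'].
      * right. rewrite (subpred_antisym _ _ H H'). intros t Ht; exact Ht.
      * left. apply Hc; auto.
    + right. intros t Ht. apply g_infl, H, Ht.
  - destruct (classic (forall X, C X -> subpred X c)) as [H|H].
    + left. intros t [X [HX Ht]]. exact (H X HX t Ht).
    + right. apply not_all_ex_not in H. destruct H as [X H].
      apply imply_to_and in H. destruct H as [HX H].
      destruct (IH X HX) as [H1|H1]; [contradiction|].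
      intros t Ht. exists X. split; auto.
Qed.

Lemma tower_extreme c : tower c -> extreme c.
Proof.
  intros Hc. induction Hc as [Z HZ IH | C HC IH].
  - intros Y HY H1 H2. destruct (extreme_compare Z IH Y HY) as [H|H].
    + destruct (classic (subpred Z Y)) as [H'|H'].
      * rewrite (subpred_antisym _ _ H H'). intros t Ht; exact Ht.
      * intros t Ht. apply g_infl. exact (IH Y HY H H' t Ht).
    + exfalso. apply H2. exact H.
  - intros Y HY H1 H2.
    assert (exists X, C X /\ ~ subpred X Y) as [X [HX HXY]].
    { apply NNPP; intro Hn. apply H2. intros t [X [HX Ht]].
      apply NNPP; intro Hnt. apply Hn. exists X. split; [exact HX|].
      intro Hs. apply Hnt, Hs, Ht. }
    destruct (extreme_compare X (IH X HX) Y HY) as [H|H].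
    + intros t Ht. exists X. split; [exact HX|]. apply (IH X HX Y HY H HXY t Ht).
    + exfalso. apply HXY. intros t Ht. apply H, g_infl, Ht.
Qed.

Lemma tower_is_chain : is_chain tower.
Proof.
  intros X Y HX HY. destruct (extreme_compare Y (tower_extreme Y HY) X HX) as [H|H]; auto.
  right. intros t Ht. apply H, g_infl, Ht.
Qed.
End Tower.

Theorem zorn {T : Type} (F : (T -> Prop) -> Prop)
  (F_chain : forall C, (forall X, C X -> F X) -> is_chain C -> F (chain_union C)) :
  exists X, F X /\ forall Y, F Y -> subpred X Y -> subpred Y X.
Proof.
  apply NNPP; intro H.
  assert (step : forall X, exists Y, (F X -> F Y /\ ~ subpred Y X) /\ subpred X Y).
  { intro X. destruct (classic (F X)) as [HF|HF].
    - assert (exists Y, F Y /\ subpred X Y /\ ~ subpred Y X) as [Y HY].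
      { apply NNPP; intro Hn. apply H. exists X. split; auto.
        intros Y HY HXY. apply NNPP; intro Hn2. apply Hn. exists Y; auto. }
      exists Y. intuition.
    - exists X. split; [tauto|]. intros t Ht; exact Ht. }
  set (g := choice_fun step).
  assert (g_infl : forall X, subpred X (g X)) by (intro X; apply (choice_fun_spec step)).
  assert (tower_F : forall X, tower g X -> F X).
  { intros X HX. induction HX as [Z HZ IH | C HC IH].
    - apply (choice_fun_spec step Z), IH.
    - apply F_chain; auto. intros X Y HX HY. apply (tower_is_chain g g_infl); auto. }
  set (U := chain_union (tower g)).
  assert (HU : tower g U) by (apply tower_union; auto).
  destruct (proj1 (choice_fun_spec step U) (tower_F U HU)) as [_ Hn].
  apply Hn. intros t Ht. exists (g U). split; [apply tower_step; exact HU | exact Ht].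
Qed.

Lemma card_le_empty (T : Type) : card_le Empty_set T.
Proof. exists (Empty_set_rect _). intros []. Qed.

Definition pinj {X Y : Type} (r : X * Y -> Prop) :=
  (forall x y y', r (x, y) -> r (x, y') -> y = y') /\
  (forall x x' y, r (x, y) -> r (x', y) -> x = x').

Lemma pinj_chain_union {X Y : Type} (C : (X * Y -> Prop) -> Prop) :
  (forall r, C r -> pinj r) -> is_chain C -> pinj (chain_union C).
Proof.
  intros HC Hch. split.
  - intros x y y' [r1 [H1 r1xy]] [r2 [H2 r2xy]].
    destruct (Hch r1 r2 H1 H2) as [S|S].
    + apply (proj1 (HC r2 H2) x); auto.
    + apply (proj1 (HC r1 H1) x); auto.
  - intros x x' y [r1 [H1 r1xy]] [r2 [H2 r2xy]].
    destruct (Hch r1 r2 H1 H2) as [S|S].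
    + apply (proj2 (HC r2 H2) x x' y); auto.
    + apply (proj2 (HC r1 H1) x x' y); auto.
Qed.

Lemma total_pinj_card_le {X Y : Type} (r : X * Y -> Prop) :
  pinj r -> (forall x, exists y, r (x, y)) -> card_le X Y.
Proof.
  intros [_ Hi] Htot. exists (choice_fun Htot). intros a b E.
  apply (Hi a b (choice_fun Htot a)); [exact (choice_fun_spec Htot a)|].
  rewrite E. exact (choice_fun_spec Htot b).
Qed.

Lemma pinj_swap {X Y : Type} (r : X * Y -> Prop) :
  pinj r -> pinj (fun p : Y * X => r (snd p, fst p)).
Proof. intros [Hf Hi]. split; simpl; eauto. Qed.

Lemma card_le_total (X Y : Type) : card_le X Y \/ card_le Y X.
Proof.
  destruct (zorn (@pinj X Y)) as [r [Hr Hmax]].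
  { intros C HC Hch. apply pinj_chain_union; auto. }
  destruct (classic (forall x, exists y, r (x, y))) as [Hx|Hx].
  { left. exact (total_pinj_card_le r Hr Hx). }
  destruct (classic (forall y, exists x, r (x, y))) as [Hy|Hy].
  { right. apply (total_pinj_card_le _ (pinj_swap r Hr)). exact Hy. }
  exfalso. apply not_all_ex_not in Hx as [x0 Hx]. apply not_all_ex_not in Hy as [y0 Hy].
  set (r' := fun p => r p \/ p = (x0, y0)).
  assert (Hr' : pinj r').
  { destruct Hr as [Hf Hi]. split.
    - intros x y y' [H1|H1] [H2|H2]; eauto.
      + injection H2; intros; subst. exfalso. apply Hx. eauto.
      + injection H1; intros; subst. exfalso. apply Hx. eauto.
      + congruence.
    - intros x x' y [H1|H1] [H2|H2]; eauto.
      + injection H2; intros; subst. exfalso. apply Hy. eauto.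
      + injection H1; intros; subst. exfalso. apply Hy. eauto.
      + congruence. }
  apply Hx. exists y0. apply (Hmax r' Hr'); [intros p Hp; left; exact Hp | right; reflexivity].
Qed.

(* [r] injects [S × nat] into [S], where [S] is the set of rows [t] with [(t, 0)] in
   the domain of [r]. *)
Definition row_injection {Th : Type} (r : (Th * nat) * Th -> Prop) :=
  pinj r /\ (forall t k k' u, r ((t, k), u) -> exists u', r ((t, k'), u')) /\
  (forall a u, r (a, u) -> exists u', r ((u, 0), u')).

Definition rows {Th : Type} (r : (Th * nat) * Th -> Prop) (t : Th) := exists u, r ((t, 0), u).

Lemma row_injection_chain_union {Th : Type} (C : ((Th * nat) * Th -> Prop) -> Prop) :
  (forall r, C r -> row_injection r) -> is_chain C -> row_injection (chain_union C).
Proof.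
  intros HC Hch. split; [|split].
  - apply pinj_chain_union; auto. intros r Hr; apply HC, Hr.
  - intros t k k' u [r [Hr Hu]]. destruct (proj1 (proj2 (HC r Hr)) t k k' u Hu) as [u' Hu'].
    exists u'. exists r; auto.
  - intros a u [r [Hr Hu]]. destruct (proj2 (proj2 (HC r Hr)) a u Hu) as [u' Hu'].
    exists u'. exists r; auto.
Qed.

(* A maximal row injection leaves no room for an infinite sequence of fresh rows
   [cc k]: it could be extended by [(cc k, j) |-> cc <k, j>]. *)
Lemma maximal_row_injection_cocountable {Th : Type} (r : (Th * nat) * Th -> Prop) :
  row_injection r -> (forall r', row_injection r' -> subpred r r' -> subpred r' r) ->
  card_le {t | ~ rows r t} nat.
Proof.
  intros [[Hf Hi] [Hd Him]] Hmax.
  assert (HdS : forall t k u, r ((t, k), u) -> rows r t).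
  { intros t k u H. destruct (Hd t k 0 u H) as [u' Hu']. exists u'; exact Hu'. }
  assert (HimS : forall a u, r (a, u) -> rows r u).
  { intros a u H. destruct (Him a u H) as [u' Hu']. exists u'; exact Hu'. }
  destruct (card_le_total nat {t | ~ rows r t}) as [[c Hc]|]; [|assumption].
  exfalso.
  set (cc := fun k => proj1_sig (c k)).
  assert (ccS : forall k, ~ rows r (cc k)) by (intro k; exact (proj2_sig (c k))).
  assert (ccI : forall k l, cc k = cc l -> k = l) by (intros k l H; apply Hc, sig_eq, H).
  set (r' := fun p => r p \/ exists k j, p = ((cc k, j), cc (Cantor.to_nat (k, j)))).
  assert (Hr' : row_injection r').
  { split; [split|split].
    - intros x y y' [H1|[k1 [j1 E1]]] [H2|[k2 [j2 E2]]]; eauto.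
      + injection E2; intros; subst. exfalso. apply (ccS k2). eapply HdS; eauto.
      + injection E1; intros; subst. exfalso. apply (ccS k1). eapply HdS; eauto.
      + injection E1 as Ex1 Ey1. injection E2 as Ex2 Ey2. subst y y'.
        rewrite Ex1 in Ex2. injection Ex2 as Ek Ej. apply ccI in Ek. subst. reflexivity.
    - intros x x' y [H1|[k1 [j1 E1]]] [H2|[k2 [j2 E2]]]; eauto.
      + injection E2; intros; subst. exfalso. eapply ccS. eapply HimS; eauto.
      + injection E1; intros; subst. exfalso. eapply ccS. eapply HimS; eauto.
      + injection E1 as Ex1 Ey1. injection E2 as Ex2 Ey2. subst x x'.
        rewrite Ey1 in Ey2.
        pose proof (Cantor.to_nat_inj (k1, j1) (k2, j2) (ccI _ _ Ey2)) as Ek.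
        injection Ek as Ek Ej. subst. reflexivity.
    - intros t k k' u [H1|[k1 [j1 E1]]].
      + destruct (Hd t k k' u H1) as [u' Hu']. exists u'. left; exact Hu'.
      + injection E1; intros; subst. eexists. right. exists k1, k'. reflexivity.
    - intros a u [H1|[k1 [j1 E1]]].
      + destruct (Him a u H1) as [u' Hu']. exists u'. left; exact Hu'.
      + injection E1; intros; subst. eexists. right.
        exists (Cantor.to_nat (k1, j1)), 0. reflexivity. }
  apply (ccS 0). exists (cc (Cantor.to_nat (0, 0))).
  apply (Hmax r' Hr'); [intros p Hp; left; exact Hp | right; exists 0, 0; reflexivity].
Qed.

Lemma absorbing_rows_exist (Th : Type) :
  exists (S : Th -> Prop) (phi : Th -> nat -> Th),
    (forall t k, S t -> S (phi t k)) /\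
    (forall t k t' k', S t -> S t' -> phi t k = phi t' k' -> t = t' /\ k = k') /\
    card_le {t | ~ S t} nat.
Proof.
  destruct (zorn (@row_injection Th)) as [r [Hr Hmax]]; [apply row_injection_chain_union|].
  pose proof (maximal_row_injection_cocountable r Hr Hmax) as Hco.
  destruct Hr as [[Hf Hi] [Hd Him]].
  assert (exphi : forall t k, exists u, rows r t -> r ((t, k), u)).
  { intros t k. destruct (classic (rows r t)) as [[u Hu]|H].
    - destruct (Hd t 0 k u Hu) as [u' Hu']. exists u'; auto.
    - exists t. intro; contradiction. }
  set (phi := fun t k => choice_fun (fun t => exphi (fst t) (snd t)) (t, k)).
  assert (phis : forall t k, rows r t -> r ((t, k), phi t k)).
  { intros t k. exact (choice_fun_spec (fun t => exphi (fst t) (snd t)) (t, k)). }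
  exists (rows r), phi. split; [|split; [|exact Hco]].
  - intros t k H. destruct (Him _ _ (phis t k H)) as [u' Hu']. exists u'; exact Hu'.
  - intros t k t' k' H1 H2 E. pose proof (phis t k H1) as P1. pose proof (phis t' k' H2) as P2.
    rewrite E in P1. pose proof (Hi _ _ _ P1 P2) as Q. injection Q; auto.
Qed.

Lemma card_le_prod_nat (Th : Type) : card_le nat Th -> card_le (Th * nat) Th.
Proof.
  intros [c0 Hc0].
  destruct (absorbing_rows_exist Th) as [S [phi [phiS [phiI [d Hd]]]]].
  destruct (classic (exists t, S t)) as [[t0 Ht0]|Hn].
  - (* the orbit [e] of [phi _ 0] through [phi t0 1] is a copy of [nat] inside [S],
       which absorbs the countable complement of [S] using the odd columns *)
    set (e := fun k => Nat.iter k (fun u => phi u 0) (phi t0 1)).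
    assert (eS : forall k, S (e k)) by (induction k; simpl; apply phiS; auto).
    assert (eI : forall k l, e k = e l -> k = l).
    { induction k; intros [|l] E; simpl in E; auto.
      - apply phiI in E; try apply eS; auto. destruct E; discriminate.
      - apply phiI in E; try apply eS; auto. destruct E; discriminate.
      - apply phiI in E; try apply eS. destruct E. f_equal. apply IHk; auto. }
    exists (fun p : Th * nat => let (x, j) := p in
      match excluded_middle_informative (S x) with
      | left _ => phi x (2 * j)
      | right H => phi (e (d (exist _ x H))) (2 * j + 1) end).
    intros [x j] [x' j'].
    destruct (excluded_middle_informative (S x)) as [H1|H1];
    destruct (excluded_middle_informative (S x')) as [H2|H2]; intro E;
      apply phiI in E; auto; destruct E as [E1 E2]; try lia.
    + subst. f_equal. lia.
    + apply eI, Hd in E1. injection E1; intros; subst. f_equal. lia.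
  - assert (Hnat : card_le Th nat).
    { exists (fun t => d (exist _ t (fun H => Hn (ex_intro _ t H)))).
      intros a b E. apply Hd in E. injection E; auto. }
    destruct Hnat as [dd Hdd].
    exists (fun p => c0 (Cantor.to_nat (dd (fst p), snd p))).
    intros [a j] [b k] E. apply Hc0, Cantor.to_nat_inj in E. simpl in E.
    injection E; intros; subst. apply Hdd in H0. subst; reflexivity.
Qed.

Lemma small_empty (Th : Type) {X : Type} : small Th (fun _ : X => False).
Proof. exists (fun p => False_rect Th (proj2_sig p)). intros [a Ha]; destruct Ha. Qed.

Lemma small_incl (Th : Type) {X : Type} (P Q : X -> Prop) :
  subpred P Q -> small Th Q -> small Th P.
Proof.
  intros H [f Hf]. exists (fun p => f (exist _ (proj1_sig p) (H _ (proj2_sig p)))).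
  intros a b E. apply Hf in E. apply sig_eq. injection E; auto.
Qed.

Lemma small_union (Th : Type) {X : Type} (P Q : X -> Prop) :
  card_le nat Th -> small Th P -> small Th Q -> small Th (fun x => P x \/ Q x).
Proof.
  intros Hn [f Hf] [g Hg]. destruct (card_le_prod_nat Th Hn) as [k Hk].
  exists (fun p => match excluded_middle_informative (P (proj1_sig p)) with
          | left H => k (f (exist _ _ H), 0)
          | right H => k (g (exist _ (proj1_sig p)
                             (or_ind (fun a => False_ind _ (H a)) (fun b => b) (proj2_sig p))), 1)
          end).
  intros [a Ha] [b Hb]; simpl.
  destruct (excluded_middle_informative (P a)) as [H1|H1];
  destruct (excluded_middle_informative (P b)) as [H2|H2]; intro E; apply Hk in E;
    pose proof (f_equal fst E) as E1; pose proof (f_equal snd E) as E2; simpl in E1, E2;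
    try discriminate.
  - apply Hf in E1. injection E1; intros; subst. apply sig_eq; reflexivity.
  - apply Hg in E1. injection E1; intros; subst. apply sig_eq; reflexivity.
Qed.

Lemma small_image (Th : Type) {X Y : Type} (P : X -> Prop) (g : X -> Y -> Prop) :
  (forall x y y', g x y -> g x y' -> y = y') -> small Th P ->
  small Th (fun y => exists x, P x /\ g x y).
Proof.
  intros Hfun [f Hf].
  exists (fun q => let w := constructive_indefinite_description _ (proj2_sig q) in
    f (exist _ (proj1_sig w) (proj1 (proj2_sig w)))).
  intros [a Ha] [b Hb]; simpl. intro E. apply Hf in E. injection E; intro E'.
  apply sig_eq; simpl. revert E'.
  destruct (constructive_indefinite_description _ Ha) as [x [Hx1 Hx2]].
  destruct (constructive_indefinite_description _ Hb) as [x' [Hx1' Hx2']].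
  simpl. intro E'. subst x'. eapply Hfun; eauto.
Qed.

Arguments gA1 {A V ar M1 M2} g _.
Arguments gA2 {A V ar M1 M2} g _.
Arguments gh1 {A V ar M1 M2} g _.
Arguments gh2 {A V ar M1 M2} g _.
Arguments gg {A V ar M1 M2} g _ _.
Arguments gb {A V ar M1 M2} g.
Arguments gn {A V ar M1 M2} g.

Lemma ord_le_lt_wf {A : Type} (R : A -> A -> Prop) :
  well_founded R -> well_founded (ord_le_lt R).
Proof.
  intros wf.
  assert (HS : forall a, Acc (ord_le_lt R) (Some a)).
  { intro a. induction a as [a IH] using (well_founded_induction wf).
    constructor. intros [b|] Hb; simpl in Hb; [apply IH; exact Hb|contradiction]. }
  intros [a|]; [apply HS|]. constructor. intros [b|] Hb; simpl in Hb; [apply HS|contradiction].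
Qed.

Section Strategies.
Context (Th : Type) {A : Type} (R : A -> A -> Prop) (wf : well_founded R)
  {V : Type} {ar : V -> nat}.

Lemma iso_wins_of_invariant (M1 M2 : structure V ar) (Inv : gstate M1 M2 -> Prop)
  (H1 : forall s b' A', Inv s -> ais_legal1 Th R M1 M2 s b' A' ->
        exists s', iso_resp1 Th M1 M2 s b' A' s' /\ Inv s')
  (H2 : forall s b' A', Inv s -> ais_legal2 Th R M1 M2 s b' A' ->
        exists s', iso_resp2 Th M1 M2 s b' A' s' /\ Inv s') :
  forall s, Inv s -> iso_wins Th R M1 M2 s.
Proof.
  intro s. remember (gb s) as b eqn:Hb. revert s Hb.
  induction b as [b IH] using (well_founded_induction (ord_le_lt_wf R wf)).
  intros s Hb HI. constructor.
  - intros b' A' HL. destruct (H1 s b' A' HI HL) as [s' [Hr HI']].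
    exists s'. split; auto. apply (IH (gb s')); auto.
    destruct Hr as [[_ [E _]] _]. rewrite E, Hb. apply HL.
  - intros b' A' HL. destruct (H2 s b' A' HI HL) as [s' [Hr HI']].
    exists s'. split; auto. apply (IH (gb s')); auto.
    destruct Hr as [[_ [E _]] _]. rewrite E, Hb. apply HL.
Qed.

Lemma iso_wins_inv (M1 M2 : structure V ar) (s : gstate M1 M2) :
  iso_wins Th R M1 M2 s ->
  (forall b' A', ais_legal1 Th R M1 M2 s b' A' ->
     exists s', iso_resp1 Th M1 M2 s b' A' s' /\ iso_wins Th R M1 M2 s') /\
  (forall b' A', ais_legal2 Th R M1 M2 s b' A' ->
     exists s', iso_resp2 Th M1 M2 s b' A' s' /\ iso_wins Th R M1 M2 s').
Proof. intro H. destruct H as [s H1 H2]. auto. Qed.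

Lemma start_is_state (M1 M2 : structure V ar) :
  preserves_qf M1 M2 (fun _ _ => False) -> is_state Th M1 M2 (@start A V ar M1 M2).
Proof.
  intro H. split; [apply small_empty|]. split; [apply small_empty|].
  split; [simpl; tauto|]. split; [simpl; tauto|]. split; [simpl; tauto|].
  split; [exact H|simpl; tauto].
Qed.

Definition swap_state {M1 M2 : structure V ar} (s : @gstate A V ar M1 M2) : gstate M2 M1 :=
  Build_gstate M2 M1 (gA2 s) (gA1 s) (gh2 s) (gh1 s) (fun y x => gg s x y) (gb s) (gn s).

Lemma swap_state_involutive {M1 M2 : structure V ar} (s : @gstate A V ar M1 M2) :
  swap_state (swap_state s) = s.
Proof. destruct s; reflexivity. Qed.

Lemma preserves_qf_flip {M1 M2 : structure V ar} (g : carrier M1 -> carrier M2 -> Prop) :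
  preserves_qf M1 M2 g -> preserves_qf M2 M1 (fun y x => g x y).
Proof. intros H s a b Hab. symmetry. apply H. exact Hab. Qed.

Lemma is_state_swap {M1 M2 : structure V ar} (s : @gstate A V ar M1 M2) :
  is_state Th M1 M2 s -> is_state Th M2 M1 (swap_state s).
Proof.
  intros [H1 [H2 [H3 [H4 [H5 [H6 H7]]]]]].
  split; [exact H2|]. split; [exact H1|]. split; [simpl; eauto|]. split; [simpl; eauto|].
  split; [simpl; intros x y H; destruct (H5 y x H); auto|].
  split; [apply preserves_qf_flip, H6|simpl; intros x y H; destruct (H7 y x H); auto].
Qed.

Lemma iso_resp1_swap {M1 M2 : structure V ar} (s s' : @gstate A V ar M1 M2) b A' :
  iso_resp1 Th M1 M2 s b A' s' -> iso_resp2 Th M2 M1 (swap_state s) b A' (swap_state s').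
Proof.
  intros [[E1 [E2 [E3 [E4 [E5 [E6 [E7 E8]]]]]]] F].
  split; [|exact F].
  do 7 (split; [simpl; auto|]). apply is_state_swap, E8.
Qed.

Lemma iso_resp2_swap {M1 M2 : structure V ar} (s s' : @gstate A V ar M1 M2) b A' :
  iso_resp2 Th M1 M2 s b A' s' -> iso_resp1 Th M2 M1 (swap_state s) b A' (swap_state s').
Proof.
  intros [[E1 [E2 [E3 [E4 [E5 [E6 [E7 E8]]]]]]] F].
  split; [|exact F].
  do 7 (split; [simpl; auto|]). apply is_state_swap, E8.
Qed.

Lemma iso_wins_swap {M1 M2 : structure V ar} (s : @gstate A V ar M1 M2) :
  iso_wins Th R M1 M2 s -> iso_wins Th R M2 M1 (swap_state s).
Proof.
  intro H. rewrite <- (swap_state_involutive s) in H.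
  apply (iso_wins_of_invariant M2 M1 (fun t => iso_wins Th R M1 M2 (swap_state t)));
    [| |exact H].
  - intros t b' A' Ht HL. destruct (proj2 (iso_wins_inv _ _ _ Ht) b' A' HL) as [s' [Hr Hw]].
    exists (swap_state s'). split.
    + rewrite <- (swap_state_involutive t). apply iso_resp2_swap. exact Hr.
    + rewrite swap_state_involutive. exact Hw.
  - intros t b' A' Ht HL. destruct (proj1 (iso_wins_inv _ _ _ Ht) b' A' HL) as [s' [Hr Hw]].
    exists (swap_state s'). split.
    + rewrite <- (swap_state_involutive t). apply iso_resp1_swap. exact Hr.
    + rewrite swap_state_involutive. exact Hw.
Qed.

Lemma iso_wins_of_sym_invariant (M1 M2 : structure V ar)
  (I12 : gstate M1 M2 -> Prop) (I21 : @gstate A V ar M2 M1 -> Prop)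
  (S12 : forall s, I12 s -> I21 (swap_state s))
  (H1 : forall s b' A', I12 s -> ais_legal1 Th R M1 M2 s b' A' ->
        exists s', iso_resp1 Th M1 M2 s b' A' s' /\ I12 s')
  (H2 : forall t b' A', I21 t -> ais_legal1 Th R M2 M1 t b' A' ->
        exists t', iso_resp1 Th M2 M1 t b' A' t' /\ I21 t')
  (S21 : forall t, I21 t -> I12 (swap_state t)) :
  forall s, I12 s -> iso_wins Th R M1 M2 s.
Proof.
  apply iso_wins_of_invariant; auto.
  intros s b' A' HI HL. destruct (H2 (swap_state s) b' A' (S12 s HI) HL) as [t [Hr Ht]].
  exists (swap_state t). split; auto.
  rewrite <- (swap_state_involutive s). apply iso_resp1_swap. exact Hr.
Qed.
End Strategies.

Section Answers.
Context (Th : Type) (Hn : card_le nat Th) {A V : Type} {ar : V -> nat}.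

Definition answer1 {M1 M2 : structure V ar} (s : @gstate A V ar M1 M2) (b' : option A) A'
  (g' : carrier M1 -> carrier M2 -> Prop) h1' h2' : @gstate A V ar M1 M2 :=
  Build_gstate M1 M2 A' (fun y => gA2 s y \/ exists x, g' x y) h1' h2' g' b' (S (gn s)).

Definition answer2 {M1 M2 : structure V ar} (s : @gstate A V ar M1 M2) (b' : option A) A'
  (g' : carrier M1 -> carrier M2 -> Prop) h1' h2' : @gstate A V ar M1 M2 :=
  Build_gstate M1 M2 (fun x => gA1 s x \/ exists y, g' x y) A' h1' h2' g' b' (S (gn s)).

Lemma iso_resp1_answer1 (M1 M2 : structure V ar) (s : @gstate A V ar M1 M2) (b' : option A) A'
  (g' : carrier M1 -> carrier M2 -> Prop) h1' h2' :
  is_state Th M1 M2 s ->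
  (forall x, gA1 s x -> A' x) -> small Th A' ->
  (forall x y, gg s x y -> g' x y) ->
  (forall x, (exists y, g' x y) <-> (gA1 s x /\ gh1 s x < S (gn s))) ->
  (forall x y y', g' x y -> g' x y' -> y = y') ->
  (forall x x' y, g' x y -> g' x' y -> x = x') ->
  preserves_qf M1 M2 g' ->
  (forall x, gA1 s x -> h1' x = gh1 s x) ->
  (forall x, A' x -> ~ gA1 s x -> S (gn s) <= h1' x) ->
  (forall y, gA2 s y -> h2' y = gh2 s y) ->
  (forall x y, g' x y -> h2' y < S (gn s)) ->
  iso_resp1 Th M1 M2 s b' A' (answer1 s b' A' g' h1' h2').
Proof.
  intros Hs HA' HsA' Hgg Hdom Hf Hi Hp Hh1 Hh1' Hh2 Hh2'.
  destruct Hs as [HsA1 [HsA2 [Hsf [Hsi [Hsg [Hsp Hsh]]]]]].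
  assert (St : is_state Th M1 M2 (answer1 s b' A' g' h1' h2')).
  { split; [|split; [|split; [|split; [|split; [|split]]]]]; simpl; auto.
    - apply small_union; auto.
      apply (small_incl _ _ (fun y => exists x, gA1 s x /\ g' x y)).
      + intros y [x Hx]. exists x. split; auto. apply (proj1 (Hdom x)). eauto.
      + apply small_image; auto.
    - intros x y H. split; [|right; eauto]. apply HA'. apply (proj1 (Hdom x)). eauto.
    - intros x y H. split; eauto.
      assert (gA1 s x /\ gh1 s x < S (gn s)) as [Ha Hb] by (apply Hdom; eauto).
      rewrite Hh1; auto. }
  split; [|simpl; split; [tauto|split; [tauto|split; [exact Hh1'|exact Hdom]]]].
  do 7 (split; [simpl; auto|]). exact St.
Qed.

Lemma iso_resp2_answer2 (M1 M2 : structure V ar) (s : @gstate A V ar M1 M2) (b' : option A) A'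
  (g' : carrier M1 -> carrier M2 -> Prop) h1' h2' :
  is_state Th M1 M2 s ->
  (forall y, gA2 s y -> A' y) -> small Th A' ->
  (forall x y, gg s x y -> g' x y) ->
  (forall y, (exists x, g' x y) <-> (gA2 s y /\ gh2 s y < S (gn s))) ->
  (forall x y y', g' x y -> g' x y' -> y = y') ->
  (forall x x' y, g' x y -> g' x' y -> x = x') ->
  preserves_qf M1 M2 g' ->
  (forall y, gA2 s y -> h2' y = gh2 s y) ->
  (forall y, A' y -> ~ gA2 s y -> S (gn s) <= h2' y) ->
  (forall x, gA1 s x -> h1' x = gh1 s x) ->
  (forall x y, g' x y -> h1' x < S (gn s)) ->
  iso_resp2 Th M1 M2 s b' A' (answer2 s b' A' g' h1' h2').
Proof.
  intros Hs HA' HsA' Hgg Hdom Hf Hi Hp Hh2 Hh2' Hh1 Hh1'.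
  rewrite <- (swap_state_involutive s).
  apply (iso_resp1_swap Th (swap_state s)
           (answer1 (swap_state s) b' A' (fun y x => g' x y) h2' h1')).
  apply iso_resp1_answer1; simpl; eauto.
  - apply is_state_swap, Hs.
  - apply preserves_qf_flip, Hp.
Qed.
End Answers.

Lemma preserves_qf_empty_vocab (M1 M2 : structure Empty_set empty_ar) g :
  preserves_qf M1 M2 g.
Proof. intros []. Qed.

(* For models of the empty vocabulary ISO must only keep [g] injective.  [X] contains a
   copy [iota] of [Th × nat]; [Y] has room to avoid any small set.  Every element [y]
   of side 2 still without preimage has a reserved preimage [sig y = iota (t, m)] with
   [gh2 s y = S m]; the levels [m >= gn s] of the copy are kept unused, with height
   [S m] whenever AIS has played them. *)
Record reserved_preimages {A Th : Type} {X Y : structure Empty_set empty_ar}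
  (iota : Th * nat -> carrier X) (s : @gstate A _ _ X Y) (sig : carrier Y -> carrier X)
  : Prop := {
  rp_level : forall y, gA2 s y -> ~ (exists x, gg s x y) ->
    exists t m, sig y = iota (t, m) /\ gh2 s y = S m /\ m < gn s;
  rp_inj : forall y y', gA2 s y -> gA2 s y' -> ~ (exists x, gg s x y) ->
    ~ (exists x, gg s x y') -> sig y = sig y' -> y = y';
  rp_unpaired : forall y, gA2 s y -> ~ (exists x, gg s x y) -> forall z, ~ gg s (sig y) z;
  rp_height : forall y, gA2 s y -> ~ (exists x, gg s x y) -> gA1 s (sig y) ->
    gh2 s y <= gh1 s (sig y) /\ (gh1 s (sig y) <= gh2 s y \/ gh1 s (sig y) <= gn s);
  rp_fresh : forall t m, gn s <= m -> gA1 s (iota (t, m)) ->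
    gh1 s (iota (t, m)) = S m /\ forall z, ~ gg s (iota (t, m)) z }.

Section LargeSets.
Context (Th : Type) (Hn : card_le nat Th) {A : Type} (R : A -> A -> Prop)
  (X Y : structure Empty_set empty_ar)
  (iota : Th * nat -> carrier X) (Hiota : inj iota)
  (Y_avoids : forall B : carrier Y -> Prop, small Th B ->
     forall P : carrier X -> Prop, small Th P ->
     exists phi : carrier X -> carrier Y,
       (forall x x', P x -> P x' -> phi x = phi x' -> x = x') /\
       (forall x, P x -> ~ B (phi x))).

Lemma iota_height_exists (x : carrier X) :
  exists k, forall t m, iota (t, m) = x -> k = S m.
Proof.
  destruct (classic (exists t m, iota (t, m) = x)) as [[t [m H]]|H].
  - exists (S m). intros t' m' H'. rewrite <- H in H'. apply Hiota in H'. injection H'; auto.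
  - exists 0. intros t m H'. exfalso. apply H. eauto.
Qed.

Definition iota_height : carrier X -> nat := choice_fun iota_height_exists.

Lemma iota_height_iota t m : iota_height (iota (t, m)) = S m.
Proof. exact (choice_fun_spec iota_height_exists (iota (t, m)) t m eq_refl). Qed.

Definition large_invariant (s : @gstate A _ _ X Y) : Prop :=
  is_state Th X Y s /\ exists sig, reserved_preimages iota s sig.

Lemma large_invariant_start : large_invariant (@start A _ _ X Y).
Proof.
  split; [apply start_is_state, preserves_qf_empty_vocab|].
  destruct Hn as [c0 _]. exists (fun _ => iota (c0 0, 0)).
  split; simpl; tauto.
Qed.

Section Side1.
Variables (s : @gstate A _ _ X Y) (sig : carrier Y -> carrier X) (phi : carrier X -> carrier Y).
Hypotheses (Hs : is_state Th X Y s) (Hsig : reserved_preimages iota s sig).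

Definition unpaired2 (y : carrier Y) := ~ exists x, gg s x y.
Definition due1 (x : carrier X) := gA1 s x /\ gh1 s x < S (gn s) /\ ~ exists z, gg s x z.
Definition owner (x : carrier X) (y : carrier Y) := gA2 s y /\ unpaired2 y /\ sig y = x.
Definition unowned_due1 (x : carrier X) := due1 x /\ ~ exists y, owner x y.

Hypotheses
  (Hphi_inj : forall x x', unowned_due1 x -> unowned_due1 x' -> phi x = phi x' -> x = x')
  (Hphi_new : forall x, unowned_due1 x -> ~ gA2 s (phi x)).

(* A due element is sent to the element it is reserved for, if any, else to a new
   element [phi x]. *)
Definition g1 x y := gg s x y \/ (due1 x /\ owner x y) \/ (unowned_due1 x /\ y = phi x).
Definition h1_1 x := classic_if (gA1 s x) (gh1 s x) (Nat.max (S (gn s)) (iota_height x)).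
Definition h2_1 y := classic_if (gA2 s y) (gh2 s y) (gn s).

Lemma g1_dom x : (exists y, g1 x y) <-> (gA1 s x /\ gh1 s x < S (gn s)).
Proof.
  destruct Hs as [_ [_ [_ [_ [Hsg [_ Hsh]]]]]]. split.
  - intros [y [H|[[[H1 [H2 _]] _]|[[[H1 [H2 _]] _] _]]]]; auto.
    destruct (Hsh x y H). destruct (Hsg x y H). split; auto.
  - intros [H1 H2]. destruct (classic (exists z, gg s x z)) as [[z Hz]|Hz].
    + exists z. left; exact Hz.
    + destruct (classic (exists y, owner x y)) as [[y Hy]|Hy].
      * exists y. right; left. split; [split; auto|exact Hy].
      * exists (phi x). right; right. split; [split; [split; auto|exact Hy]|reflexivity].
Qed.

Lemma g1_functional x y y' : g1 x y -> g1 x y' -> y = y'.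
Proof.
  destruct Hs as [_ [_ [Hsf _]]].
  intros [H|[[Hnx Ho]|[Hd E]]] [H'|[[Hnx' Ho']|[Hd' E']]].
  - eauto.
  - exfalso. apply (proj2 (proj2 Hnx')). eauto.
  - exfalso. apply (proj2 (proj2 (proj1 Hd'))). eauto.
  - exfalso. apply (proj2 (proj2 Hnx)). eauto.
  - destruct Ho as [Ha [Hu Hsy]]. destruct Ho' as [Ha' [Hu' Hsy']].
    apply (rp_inj _ _ _ Hsig); auto. congruence.
  - exfalso. apply (proj2 Hd'). eauto.
  - exfalso. apply (proj2 (proj2 (proj1 Hd))). eauto.
  - exfalso. apply (proj2 Hd). eauto.
  - congruence.
Qed.

Lemma g1_injective x x' y : g1 x y -> g1 x' y -> x = x'.
Proof.
  destruct Hs as [_ [_ [_ [Hsi [Hsg _]]]]].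
  intros [H|[[Hnx Ho]|[Hd E]]] [H'|[[Hnx' Ho']|[Hd' E']]].
  - eauto.
  - exfalso. apply (proj1 (proj2 Ho')). eauto.
  - exfalso. subst y. apply (Hphi_new x' Hd'). apply (Hsg x _ H).
  - exfalso. apply (proj1 (proj2 Ho)). eauto.
  - destruct Ho as [Ha [Hu Hsy]]. destruct Ho' as [Ha' [Hu' Hsy']]. congruence.
  - exfalso. subst y. apply (Hphi_new x' Hd'). apply Ho.
  - exfalso. subst y. apply (Hphi_new x Hd). apply (Hsg x' _ H').
  - exfalso. subst y. apply (Hphi_new x Hd). apply Ho'.
  - subst. apply Hphi_inj; auto.
Qed.

Lemma g1_height2 x y : g1 x y -> h2_1 y < S (gn s).
Proof.
  destruct Hs as [_ [_ [_ [_ [Hsg [_ Hsh]]]]]].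
  intros [H|[[Hnx Ho]|[Hd E]]]; unfold h2_1.
  - rewrite classic_if_true by apply (Hsg x y H). destruct (Hsh x y H). lia.
  - destruct Ho as [Ha [Hu Hsy]]. rewrite classic_if_true by exact Ha.
    destruct Hnx as [Hx1 [Hx2 _]]. subst x.
    destruct (rp_height _ _ _ Hsig y Ha Hu Hx1). lia.
  - rewrite classic_if_false; [lia|]. subst y. apply Hphi_new; auto.
Qed.

Lemma iso_resp1_g1 (b' : option A) (A' : carrier X -> Prop) :
  (forall x, gA1 s x -> A' x) -> small Th A' ->
  iso_resp1 Th X Y s b' A' (answer1 s b' A' g1 h1_1 h2_1).
Proof.
  intros HA' HsA'. apply iso_resp1_answer1; auto.
  - intros x y H. left; exact H.
  - exact g1_dom.
  - exact g1_functional.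
  - exact g1_injective.
  - apply preserves_qf_empty_vocab.
  - intros x H. unfold h1_1. rewrite classic_if_true; auto.
  - intros x H1 H2. unfold h1_1. rewrite classic_if_false; auto. lia.
  - intros y H. unfold h2_1. rewrite classic_if_true; auto.
  - exact g1_height2.
Qed.

Lemma reserved_preimages_g1 (b' : option A) (A' : carrier X -> Prop) :
  reserved_preimages iota (answer1 s b' A' g1 h1_1 h2_1) sig.
Proof.
  destruct Hs as [_ [_ [_ [_ [Hsg _]]]]].
  assert (Hunp : forall y, (gA2 s y \/ exists x, g1 x y) -> ~ (exists x, g1 x y) ->
                 gA2 s y /\ unpaired2 y).
  { intros y [H|H] H'; [|contradiction]. split; auto.
    intros [x Hx]. apply H'. exists x. left; exact Hx. }
  split; simpl.
  - intros y H1 H2. destruct (Hunp y H1 H2) as [Ha Hu].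
    destruct (rp_level _ _ _ Hsig y Ha Hu) as [t [m [E1 [E2 E3]]]]. exists t, m.
    unfold h2_1. rewrite classic_if_true by exact Ha. split; [exact E1|split; [exact E2|lia]].
  - intros y y' H1 H1' H2 H2' E.
    destruct (Hunp y H1 H2). destruct (Hunp y' H1' H2'). apply (rp_inj _ _ _ Hsig); auto.
  - intros y H1 H2 z Hz. destruct (Hunp y H1 H2) as [Ha Hu].
    destruct Hz as [H|[[Hnx Ho]|[Hd E]]].
    + exact (rp_unpaired _ _ _ Hsig y Ha Hu z H).
    + destruct Ho as [Ha' [Hu' Esz]].
      assert (z = y) by (apply (rp_inj _ _ _ Hsig); auto). subst z.
      apply H2. exists (sig y). right; left.
      split; [exact Hnx|split; [exact Ha|split; [exact Hu|reflexivity]]].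
    + apply (proj2 Hd). exists y. split; [exact Ha|split; [exact Hu|reflexivity]].
  - intros y H1 H2 H3. destruct (Hunp y H1 H2) as [Ha Hu].
    unfold h1_1, h2_1. rewrite (classic_if_true (gA2 s y)) by exact Ha.
    destruct (classic (gA1 s (sig y))) as [Hin|Hin].
    + rewrite classic_if_true by exact Hin. destruct (rp_height _ _ _ Hsig y Ha Hu Hin). lia.
    + rewrite classic_if_false by exact Hin.
      destruct (rp_level _ _ _ Hsig y Ha Hu) as [t [m [E1 [E2 E3]]]].
      rewrite E1, iota_height_iota. lia.
  - intros t m Hm H. destruct (classic (gA1 s (iota (t, m)))) as [Hin|Hin].
    + destruct (rp_fresh _ _ _ Hsig t m) as [Q1 Q2]; [lia|exact Hin|].
      unfold h1_1. rewrite classic_if_true by exact Hin. split; auto.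
      intros z [Hz|[[Hnx _]|[[Hnx _] _]]].
      * apply (Q2 z Hz).
      * destruct Hnx as [_ [Hl _]]. lia.
      * destruct Hnx as [_ [Hl _]]. lia.
    + unfold h1_1. rewrite classic_if_false by exact Hin. rewrite iota_height_iota. split; [lia|].
      intros z [Hz|[[Hnx _]|[[Hnx _] _]]].
      * apply Hin, (Hsg _ _ Hz).
      * apply Hin, Hnx.
      * apply Hin, Hnx.
Qed.
End Side1.

Lemma large_invariant_side1 s b' A' :
  large_invariant s -> ais_legal1 Th R X Y s b' A' ->
  exists s', iso_resp1 Th X Y s b' A' s' /\ large_invariant s'.
Proof.
  intros [Hs [sig Hsig]] [_ [HA' HsA']].
  destruct (Y_avoids (gA2 s) (proj1 (proj2 Hs)) (unowned_due1 s sig)) as [phi [Hphi1 Hphi2]].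
  { apply (small_incl _ _ (gA1 s)); [intros x [[H _] _]; exact H | apply Hs]. }
  pose proof (iso_resp1_g1 s sig phi Hs Hsig Hphi1 Hphi2 b' A' HA' HsA') as Hresp.
  eexists. split; [exact Hresp|]. split; [apply Hresp|].
  exists sig. apply reserved_preimages_g1; auto.
Qed.

Section Side2.
Variables (s : @gstate A _ _ X Y) (sig : carrier Y -> carrier X)
  (A' : carrier Y -> Prop) (ee : carrier Y -> Th).
Hypotheses (Hs : is_state Th X Y s) (Hsig : reserved_preimages iota s sig)
  (Hee : forall y y', A' y -> A' y' -> ee y = ee y' -> y = y').

Definition due2 (y : carrier Y) := gA2 s y /\ gh2 s y < S (gn s) /\ unpaired2 s y.
Definition g2 x y := gg s x y \/ (due2 y /\ x = sig y).
Definition h1_2 x := classic_if (gA1 s x) (gh1 s x) (gn s).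
Definition h2_2 y := classic_if (gA2 s y) (gh2 s y) (S (gn s)).
(* new elements of side 2 reserve the unused level [gn s] of the copy of [Th × nat] *)
Definition sig2 y := classic_if (gA2 s y) (sig y) (iota (ee y, gn s)).

Lemma g2_dom y : (exists x, g2 x y) <-> (gA2 s y /\ gh2 s y < S (gn s)).
Proof.
  destruct Hs as [_ [_ [_ [_ [Hsg [_ Hsh]]]]]]. split.
  - intros [x [H|[[H1 [H2 _]] _]]]; auto.
    destruct (Hsh x y H). destruct (Hsg x y H). split; auto.
  - intros [H1 H2]. destruct (classic (exists x, gg s x y)) as [[x Hx]|Hx].
    + exists x. left; exact Hx.
    + exists (sig y). right. split; [split; [exact H1|split; [exact H2|exact Hx]]|reflexivity].
Qed.

Lemma g2_functional x y y' : g2 x y -> g2 x y' -> y = y'.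
Proof.
  destruct Hs as [_ [_ [Hsf _]]].
  intros [H|[Hd E]] [H'|[Hd' E']].
  - eauto.
  - exfalso. subst x. destruct Hd' as [Ha [_ Hu]]. apply (rp_unpaired _ _ _ Hsig y' Ha Hu y H).
  - exfalso. subst x. destruct Hd as [Ha [_ Hu]]. apply (rp_unpaired _ _ _ Hsig y Ha Hu y' H').
  - destruct Hd as [Ha [_ Hu]]. destruct Hd' as [Ha' [_ Hu']].
    apply (rp_inj _ _ _ Hsig); auto. congruence.
Qed.

Lemma g2_injective x x' y : g2 x y -> g2 x' y -> x = x'.
Proof.
  destruct Hs as [_ [_ [_ [Hsi _]]]].
  intros [H|[Hd E]] [H'|[Hd' E']].
  - eauto.
  - exfalso. destruct Hd' as [_ [_ Hu]]. apply Hu. eauto.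
  - exfalso. destruct Hd as [_ [_ Hu]]. apply Hu. eauto.
  - congruence.
Qed.

Lemma g2_height1 x y : g2 x y -> h1_2 x < S (gn s).
Proof.
  destruct Hs as [_ [_ [_ [_ [Hsg [_ Hsh]]]]]].
  intros [H|[Hd E]]; unfold h1_2.
  - rewrite classic_if_true by apply (Hsg x y H). destruct (Hsh x y H). lia.
  - subst x. destruct Hd as [Ha [Hl Hu]].
    destruct (classic (gA1 s (sig y))) as [Hin|Hin].
    + rewrite classic_if_true by exact Hin.
      destruct (rp_height _ _ _ Hsig y Ha Hu Hin) as [_ [Q|Q]]; lia.
    + rewrite classic_if_false by exact Hin. lia.
Qed.

Lemma iso_resp2_g2 (b' : option A) :
  (forall y, gA2 s y -> A' y) -> small Th A' ->
  iso_resp2 Th X Y s b' A' (answer2 s b' A' g2 h1_2 h2_2).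
Proof.
  intros HA' HsA'. apply iso_resp2_answer2; auto.
  - intros x y H. left; exact H.
  - exact g2_dom.
  - exact g2_functional.
  - exact g2_injective.
  - apply preserves_qf_empty_vocab.
  - intros y H. unfold h2_2. rewrite classic_if_true; auto.
  - intros y H1 H2. unfold h2_2. rewrite classic_if_false; auto.
  - intros x H. unfold h1_2. rewrite classic_if_true; auto.
  - exact g2_height1.
Qed.

Lemma unpaired_g2 y : gA2 s y -> ~ (exists x, g2 x y) -> unpaired2 s y.
Proof. intros H Hu [x Hx]. apply Hu. exists x. left; exact Hx. Qed.

Lemma sig2_unpaired y : A' y -> ~ (exists x, g2 x y) -> forall z, ~ g2 (sig2 y) z.
Proof.
  destruct Hs as [_ [_ [_ [_ [Hsg _]]]]].
  intros Hy Hu z. unfold sig2.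
  destruct (classic (gA2 s y)) as [Ha|Ha].
  - rewrite classic_if_true by exact Ha. intros [H|[Hd E]].
    + apply (rp_unpaired _ _ _ Hsig y Ha (unpaired_g2 y Ha Hu) z H).
    + destruct Hd as [Hz [Hl Hz']].
      assert (z = y) by (apply (rp_inj _ _ _ Hsig); auto; apply unpaired_g2; auto).
      subst z. apply Hu. exists (sig y). right.
      split; [split; [exact Hz|split; [exact Hl|exact Hz']]|reflexivity].
  - rewrite classic_if_false by exact Ha. intros [H|[Hd E]].
    + destruct (Hsg _ _ H) as [H1 _].
      apply (proj2 (rp_fresh _ _ _ Hsig (ee y) (gn s) (le_n _) H1) z H).
    + destruct Hd as [Hz [_ Hz']].
      destruct (rp_level _ _ _ Hsig z Hz Hz') as [t [m [E1 [E2 E3]]]].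
      rewrite E1 in E. apply Hiota in E. injection E; intros; subst. lia.
Qed.

Lemma sig2_level y : gA2 s y -> ~ (exists x, g2 x y) ->
  exists t m, sig2 y = iota (t, m) /\ gh2 s y = S m /\ m < gn s.
Proof.
  intros Ha Hu. unfold sig2. rewrite classic_if_true by exact Ha.
  exact (rp_level _ _ _ Hsig y Ha (unpaired_g2 y Ha Hu)).
Qed.

Lemma reserved_preimages_g2 (b' : option A) :
  reserved_preimages iota (answer2 s b' A' g2 h1_2 h2_2) sig2.
Proof.
  split; simpl.
  - intros y Hy Hu. unfold h2_2. destruct (classic (gA2 s y)) as [Ha|Ha].
    + rewrite classic_if_true by exact Ha. destruct (sig2_level y Ha Hu) as [t [m [E1 [E2 E3]]]].
      exists t, m. split; [exact E1|split; [exact E2|lia]].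
    + rewrite classic_if_false by exact Ha. exists (ee y), (gn s).
      split; [unfold sig2; apply classic_if_false, Ha | split; [reflexivity|lia]].
  - intros y y' Hy Hy' Hu Hu' E.
    destruct (classic (gA2 s y)) as [Ha|Ha]; destruct (classic (gA2 s y')) as [Ha'|Ha'].
    + unfold sig2 in E. rewrite !classic_if_true in E by assumption.
      apply (rp_inj _ _ _ Hsig); auto; apply unpaired_g2; auto.
    + destruct (sig2_level y Ha Hu) as [t [m [E1 [_ E3]]]].
      assert (E' : sig2 y' = iota (ee y', gn s)) by (apply classic_if_false; exact Ha').
      rewrite E1, E' in E. apply Hiota in E. injection E; intros; subst. lia.
    + destruct (sig2_level y' Ha' Hu') as [t [m [E1 [_ E3]]]].
      assert (E' : sig2 y = iota (ee y, gn s)) by (apply classic_if_false; exact Ha).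
      rewrite E1, E' in E. apply Hiota in E. injection E; intros; subst. lia.
    + unfold sig2 in E. rewrite !classic_if_false in E by assumption.
      apply Hiota in E. injection E; intros. apply Hee; auto.
  - exact sig2_unpaired.
  - intros y Hy Hu [Hin|[z Hz]]; [|exfalso; apply (sig2_unpaired y Hy Hu z Hz)].
    unfold h1_2, h2_2. rewrite (classic_if_true (gA1 s (sig2 y))) by exact Hin.
    destruct (classic (gA2 s y)) as [Ha|Ha].
    + assert (Es : sig2 y = sig y) by (unfold sig2; apply classic_if_true; exact Ha).
      rewrite Es in Hin |- *. rewrite (classic_if_true (gA2 s y)) by exact Ha.
      destruct (rp_height _ _ _ Hsig y Ha (unpaired_g2 y Ha Hu) Hin). lia.
    + assert (Es : sig2 y = iota (ee y, gn s)) by (unfold sig2; apply classic_if_false; exact Ha).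
      rewrite Es in Hin |- *. rewrite (classic_if_false (gA2 s y)) by exact Ha.
      rewrite (proj1 (rp_fresh _ _ _ Hsig (ee y) (gn s) (le_n _) Hin)). lia.
  - intros t m Hm.
    assert (Hng : forall z, ~ g2 (iota (t, m)) z).
    { intros z [H|[Hd E]].
      - destruct Hs as [_ [_ [_ [_ [Hsg _]]]]]. destruct (Hsg _ _ H) as [H1 _].
        apply (proj2 (rp_fresh _ _ _ Hsig t m ltac:(lia) H1) z H).
      - destruct Hd as [Hz [_ Hz']].
        destruct (rp_level _ _ _ Hsig z Hz Hz') as [t' [m' [E1 [E2 E3]]]].
        rewrite E1 in E. apply Hiota in E. injection E; intros; subst. lia. }
    intros [Hin|[z Hz]]; [|exfalso; apply (Hng z Hz)].
    unfold h1_2. rewrite classic_if_true by exact Hin.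
    split; [apply (rp_fresh _ _ _ Hsig t m ltac:(lia) Hin)|exact Hng].
Qed.
End Side2.

Lemma large_invariant_side2 s b' A' :
  large_invariant s -> ais_legal2 Th R X Y s b' A' ->
  exists s', iso_resp2 Th X Y s b' A' s' /\ large_invariant s'.
Proof.
  intros [Hs [sig Hsig]] [_ [HA' HsA']].
  destruct Hn as [c0 _]. pose proof HsA' as [ff Hff].
  set (ee := fun y => match excluded_middle_informative (A' y) with
                      | left H => ff (exist _ y H) | right _ => c0 0 end).
  assert (Hee : forall y y', A' y -> A' y' -> ee y = ee y' -> y = y').
  { intros y y' H H' E. unfold ee in E.
    destruct (excluded_middle_informative (A' y)); [|contradiction].
    destruct (excluded_middle_informative (A' y')); [|contradiction].
    apply Hff in E. injection E; auto. }
  pose proof (iso_resp2_g2 s sig A' Hs Hsig b' HA' HsA') as Hresp.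
  eexists. split; [exact Hresp|]. split; [apply Hresp|].
  exists (sig2 s sig ee). apply reserved_preimages_g2; auto.
Qed.

Lemma E0_large_sets (wf : well_founded R) : E0 Th R X Y.
Proof.
  split; [apply large_invariant_start|].
  apply (iso_wins_of_invariant Th R wf X Y large_invariant large_invariant_side1
           large_invariant_side2 _ large_invariant_start).
Qed.
End LargeSets.

Definition power_set (Th : Type) : structure Empty_set empty_ar :=
  {| carrier := Th -> Prop; rel := fun (e : Empty_set) _ => match e return Prop with end |}.

(* Through [kap : Th × nat -> Th], column [0] diagonalises against the small family
   [B] and column [1] encodes [x]. *)
Lemma power_set_avoids (Th : Type) (Hn : card_le nat Th) :
  forall B : (Th -> Prop) -> Prop, small Th B ->
  forall (X : Type) (P : X -> Prop), small Th P ->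
  exists phi : X -> (Th -> Prop),
    (forall x x', P x -> P x' -> phi x = phi x' -> x = x') /\ (forall x, P x -> ~ B (phi x)).
Proof.
  intros B [j Hj] X P [k Hk]. destruct (card_le_prod_nat Th Hn) as [kap Hkap].
  set (diag := fun u => exists t, u = kap (t, 0) /\
                 ~ (exists Z : {Z | B Z}, j Z = t /\ proj1_sig Z u)).
  set (code := fun x u => exists H : P x, u = kap (k (exist _ x H), 1)).
  assert (diag_code : forall x u, diag u -> code x u -> False).
  { intros x u [t [E1 _]] [H E2]. rewrite E1 in E2. apply Hkap in E2. discriminate. }
  exists (fun x u => diag u \/ code x u). split.
  - intros x x' Hx Hx' E.
    assert (Hcx : code x' (kap (k (exist _ x Hx), 1))).
    { assert (Hu : diag (kap (k (exist _ x Hx), 1)) \/ code x' (kap (k (exist _ x Hx), 1)))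
        by (rewrite <- (equal_f E); right; exists Hx; reflexivity).
      destruct Hu as [Hd|Hc]; [|exact Hc].
      exfalso. apply (diag_code x _ Hd). exists Hx. reflexivity. }
    destruct Hcx as [H E2]. apply Hkap in E2. injection E2; intro E3. apply Hk in E3.
    injection E3; auto.
  - intros x Hx HB.
    set (Z0 := exist B _ HB). set (u := kap (j Z0, 0)).
    assert (key : (diag u \/ code x u) <-> ~ (diag u \/ code x u)).
    { split.
      - intros [[t' [E1 E2]]|Hc] Hu.
        + unfold u in E1. apply Hkap in E1. injection E1; intro; subst t'.
          apply E2. exists Z0. split; auto.
        + destruct Hc as [H E1]. unfold u in E1. apply Hkap in E1. discriminate.
      - intro Hn'. left. exists (j Z0). split; [reflexivity|]. intros [Z [E1 E2]].
        assert (Z = Z0) by (apply Hj; auto). subst Z. apply Hn'. exact E2. }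
    tauto.
Qed.

Lemma E1_power_set (Th : Type) (Hn : card_le nat Th) {A : Type} (R : A -> A -> Prop)
  (wf : well_founded R) (M : structure Empty_set empty_ar) :
  card_le Th (carrier M) -> E1 Th R M (power_set Th).
Proof.
  intros [f Hf]. destruct (card_le_prod_nat Th Hn) as [kap Hkap].
  apply rst_step. apply (E0_large_sets Th Hn R M (power_set Th) (fun p => f (kap p))).
  - intros a b E. apply Hkap, Hf, E.
  - intros B HB P HP. apply (power_set_avoids Th Hn B HB _ P HP).
  - exact wf.
Qed.

Lemma E1_card_ge (Th : Type) (Hn : card_le nat Th) {A : Type} (R : A -> A -> Prop)
  (wf : well_founded R) (M1 M2 : structure Empty_set empty_ar) :
  card_le Th (carrier M1) -> card_le Th (carrier M2) -> E1 Th R M1 M2.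
Proof.
  intros H1 H2. apply rst_trans with (power_set Th).
  - apply E1_power_set; auto.
  - apply rst_sym. apply E1_power_set; auto.
Qed.

Lemma not_card_le_card_le (X Y : Type) : ~ card_le X Y -> card_le Y X.
Proof. intro H. destruct (card_le_total X Y); tauto. Qed.

Definition in_image {Z L : Type} (u : Z -> L) (x : L) : Prop := exists z, u z = x.

(* [L1], [L2] consist of copies [u1], [u2] of [Z1], [Z2] together with remainders
   matched by the bijection [fr]; atomic facts about copies only depend on the
   [Z]-structures, and those touching the remainder are respected by [fr]. *)
Record sum_decomposition {V V' : Type} {ar : V -> nat} {ar' : V' -> nat}
  (Z1 Z2 : structure V' ar') (L1 L2 : structure V ar)
  (u1 : carrier Z1 -> carrier L1) (u2 : carrier Z2 -> carrier L2)
  (fr : carrier L1 -> carrier L2 -> Prop) : Prop := {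
  sd_inj1 : inj u1;
  sd_inj2 : inj u2;
  sd_rest : forall x y, fr x y -> ~ in_image u1 x /\ ~ in_image u2 y;
  sd_functional : forall x y y', fr x y -> fr x y' -> y = y';
  sd_injective : forall x x' y, fr x y -> fr x' y -> x = x';
  sd_total1 : forall x, ~ in_image u1 x -> exists y, fr x y;
  sd_total2 : forall y, ~ in_image u2 y -> exists x, fr x y;
  sd_rel_image : forall gz : carrier Z1 -> carrier Z2 -> Prop, preserves_qf Z1 Z2 gz ->
    forall s a' b', (forall i, gz (a' i) (b' i)) ->
    (rel L1 s (fun i => u1 (a' i)) <-> rel L2 s (fun i => u2 (b' i)));
  sd_rel_rest : forall s a b,
    (forall i, (in_image u1 (a i) /\ in_image u2 (b i)) \/ fr (a i) (b i)) ->
    (exists i, ~ in_image u1 (a i)) -> (rel L1 s a <-> rel L2 s b) }.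

Lemma sum_decomposition_sym {V V' : Type} {ar : V -> nat} {ar' : V' -> nat}
  (Z1 Z2 : structure V' ar') (L1 L2 : structure V ar) u1 u2 fr :
  sum_decomposition Z1 Z2 L1 L2 u1 u2 fr ->
  sum_decomposition Z2 Z1 L2 L1 u2 u1 (fun y x => fr x y).
Proof.
  intros [U1 U2 F0 Ff Fi Ft1 Ft2 HQ HC]. split; auto.
  - intros y x H. destruct (F0 x y H); auto.
  - intros y x x' H H'. eapply Fi; eauto.
  - intros y y' x H H'. eapply Ff; eauto.
  - intros gz Hgz s a' b' H. symmetry. apply (HQ (fun a b => gz b a)); auto.
    apply preserves_qf_flip, Hgz.
  - intros s a b H [i Hi]. symmetry. apply HC.
    + intro j. destruct (H j) as [[H1 H2]|H1]; [left; split; assumption|right; exact H1].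
    + exists i. destruct (H i) as [[H1 H2]|H1]; [contradiction|]. apply (F0 _ _ H1).
Qed.

(* A play on the [L]'s shadowing a play on the [Z]'s.  [gs_rest_height]: remainder
   elements matched by [fr] are due in the same round. *)
Record glued_states {A V V' : Type} {ar : V -> nat} {ar' : V' -> nat}
  {Z1 Z2 : structure V' ar'} {L1 L2 : structure V ar}
  (u1 : carrier Z1 -> carrier L1) (u2 : carrier Z2 -> carrier L2)
  (fr : carrier L1 -> carrier L2 -> Prop)
  (sZ : @gstate A _ _ Z1 Z2) (sL : @gstate A _ _ L1 L2) : Prop := {
  gs_round : gn sZ = gn sL;
  gs_ordinal : gb sZ = gb sL;
  gs_dom1 : forall z, gA1 sL (u1 z) <-> gA1 sZ z;
  gs_dom2 : forall w, gA2 sL (u2 w) <-> gA2 sZ w;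
  gs_height1 : forall z, gA1 sZ z -> gh1 sL (u1 z) = gh1 sZ z;
  gs_height2 : forall w, gA2 sZ w -> gh2 sL (u2 w) = gh2 sZ w;
  gs_map : forall z w, gg sL (u1 z) (u2 w) <-> gg sZ z w;
  gs_map_image : forall x y, gg sL x y -> (in_image u1 x <-> in_image u2 y);
  gs_map_rest : forall x y, gg sL x y -> ~ in_image u1 x -> fr x y;
  gs_rest_height : forall x y, fr x y -> gA1 sL x -> gA2 sL y ->
    Nat.max (gh1 sL x) (gn sL) = Nat.max (gh2 sL y) (gn sL) }.

Lemma glued_states_swap {A V V' : Type} {ar : V -> nat} {ar' : V' -> nat}
  (Z1 Z2 : structure V' ar') (L1 L2 : structure V ar) u1 u2 fr sZ sL :
  sum_decomposition Z1 Z2 L1 L2 u1 u2 fr -> @glued_states A _ _ _ _ _ _ _ _ u1 u2 fr sZ sL ->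
  glued_states u2 u1 (fun y x => fr x y) (swap_state sZ) (swap_state sL).
Proof.
  intros HS [C1 C2 C3 C4 C5 C6 C7 C8 C9 C10]. split; simpl; auto.
  - intros y x H. symmetry. apply C8. exact H.
  - intros y x H Hy. apply C9; auto. rewrite (C8 x y H). exact Hy.
  - intros y x H H1 H2. symmetry. apply C10; auto.
Qed.

Definition glued_invariant (Th : Type) {A : Type} (R : A -> A -> Prop)
  {V V' : Type} {ar : V -> nat} {ar' : V' -> nat}
  {Z1 Z2 : structure V' ar'} {L1 L2 : structure V ar}
  (u1 : carrier Z1 -> carrier L1) (u2 : carrier Z2 -> carrier L2)
  (fr : carrier L1 -> carrier L2 -> Prop) (sL : @gstate A _ _ L1 L2) : Prop :=
  is_state Th L1 L2 sL /\
  exists sZ, iso_wins Th R Z1 Z2 sZ /\ is_state Th Z1 Z2 sZ /\ glued_states u1 u2 fr sZ sL.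

Section GlueMove.
Context (Th : Type) (Hn : card_le nat Th) {A : Type} (R : A -> A -> Prop)
  {V V' : Type} {ar : V -> nat} {ar' : V' -> nat}
  (Z1 Z2 : structure V' ar') (L1 L2 : structure V ar)
  (u1 : carrier Z1 -> carrier L1) (u2 : carrier Z2 -> carrier L2)
  (fr : carrier L1 -> carrier L2 -> Prop)
  (HS : sum_decomposition Z1 Z2 L1 L2 u1 u2 fr).

Section Answer.
Variables (sL : @gstate A _ _ L1 L2) (sZ sZ' : @gstate A _ _ Z1 Z2)
  (b' : option A) (A' : carrier L1 -> Prop).
Hypotheses (HsL : is_state Th L1 L2 sL) (HC : glued_states u1 u2 fr sZ sL)
  (Hresp : iso_resp1 Th Z1 Z2 sZ b' (fun z => A' (u1 z)) sZ')
  (HA' : forall x, gA1 sL x -> A' x).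

Definition glue_map x y :=
  (exists z w, x = u1 z /\ y = u2 w /\ gg sZ' z w) \/
  (fr x y /\ gA1 sL x /\ gh1 sL x < S (gn sL)).

Lemma glue_h1_exists x : exists k,
  (forall z, u1 z = x -> k = gh1 sZ' z) /\
  (forall y, fr x y -> k = classic_if (gA1 sL x) (gh1 sL x)
                            (classic_if (gA2 sL y) (Nat.max (S (gn sL)) (gh2 sL y)) (S (gn sL)))).
Proof.
  destruct (classic (in_image u1 x)) as [[z Hz]|Hq].
  - exists (gh1 sZ' z). split.
    + intros z' E. rewrite <- Hz in E. apply (sd_inj1 _ _ _ _ _ _ _ HS) in E. subst; reflexivity.
    + intros y Hxy. exfalso. apply (proj1 (sd_rest _ _ _ _ _ _ _ HS x y Hxy)). exists z; exact Hz.
  - destruct (sd_total1 _ _ _ _ _ _ _ HS x Hq) as [y Hy]. eexists. split.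
    + intros z E. exfalso. apply Hq. exists z; exact E.
    + intros y' Hy'. rewrite (sd_functional _ _ _ _ _ _ _ HS x y' y Hy' Hy). reflexivity.
Qed.

Lemma glue_h2_exists y : exists k,
  (forall w, u2 w = y -> k = gh2 sZ' w) /\
  (~ in_image u2 y -> k = classic_if (gA2 sL y) (gh2 sL y) (gn sL)).
Proof.
  destruct (classic (in_image u2 y)) as [[w Hw]|Hq].
  - exists (gh2 sZ' w). split; [|intro Hq; exfalso; apply Hq; exists w; exact Hw].
    intros w' E. rewrite <- Hw in E. apply (sd_inj2 _ _ _ _ _ _ _ HS) in E. subst; reflexivity.
  - eexists. split; [|reflexivity]. intros w E. exfalso. apply Hq. exists w; exact E.
Qed.

Definition glue_h1 := choice_fun glue_h1_exists.
Definition glue_h2 := choice_fun glue_h2_exists.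

Lemma glue_h1_image z : glue_h1 (u1 z) = gh1 sZ' z.
Proof. exact (proj1 (choice_fun_spec glue_h1_exists (u1 z)) z eq_refl). Qed.

Lemma glue_h1_rest x y : fr x y -> glue_h1 x = classic_if (gA1 sL x) (gh1 sL x)
  (classic_if (gA2 sL y) (Nat.max (S (gn sL)) (gh2 sL y)) (S (gn sL))).
Proof. exact (proj2 (choice_fun_spec glue_h1_exists x) y). Qed.

Lemma glue_h2_image w : glue_h2 (u2 w) = gh2 sZ' w.
Proof. exact (proj1 (choice_fun_spec glue_h2_exists (u2 w)) w eq_refl). Qed.

Lemma glue_h2_rest y : ~ in_image u2 y -> glue_h2 y = classic_if (gA2 sL y) (gh2 sL y) (gn sL).
Proof. exact (proj2 (choice_fun_spec glue_h2_exists y)). Qed.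

Lemma glue_round : gn sZ' = S (gn sL).
Proof. destruct Hresp as [[E1 _] _]. rewrite E1, (gs_round _ _ _ _ _ HC). reflexivity. Qed.

Lemma glue_map_extends x y : gg sL x y -> glue_map x y.
Proof.
  destruct HsL as [_ [_ [_ [_ [Lg [_ Lh]]]]]].
  destruct Hresp as [[_ [_ [_ [_ [_ [_ [E7 _]]]]]]] _].
  intros H. destruct (classic (in_image u1 x)) as [[z Hz]|Hq].
  - subst x. assert (in_image u2 y) as [w Hw]
      by (apply (gs_map_image _ _ _ _ _ HC _ _ H); exists z; reflexivity).
    subst y. left. exists z, w. split; [reflexivity|]. split; [reflexivity|].
    apply E7, (gs_map _ _ _ _ _ HC), H.
  - right. split; [apply (gs_map_rest _ _ _ _ _ HC); auto|].
    destruct (Lg x y H). destruct (Lh x y H). split; [assumption|lia].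
Qed.

Lemma glue_map_dom x : (exists y, glue_map x y) <-> (gA1 sL x /\ gh1 sL x < S (gn sL)).
Proof.
  destruct HC as [C1 _ C3 _ C5 _ _ _ _ _].
  destruct Hresp as [_ [_ [_ [_ G4]]]]. split.
  - intros [y [[z [w [Ex [Ey Hg]]]]|[_ [H1 H2]]]]; auto.
    subst. assert (Hd : exists w, gg sZ' z w) by eauto. apply G4 in Hd. destruct Hd as [Ha Hh].
    split; [apply C3; auto|]. rewrite C5 by auto. rewrite <- C1. exact Hh.
  - intros [H1 H2]. destruct (classic (in_image u1 x)) as [[z Hz]|Hq].
    + subst x. assert (Hz : gA1 sZ z) by (apply C3; auto).
      assert (Hd : exists w, gg sZ' z w).
      { apply G4. split; [exact Hz|]. rewrite <- C5 by exact Hz. rewrite C1. exact H2. }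
      destruct Hd as [w Hw]. exists (u2 w). left. exists z, w. auto.
    + destruct (sd_total1 _ _ _ _ _ _ _ HS x Hq) as [y Hy]. exists y. right. auto.
Qed.

Lemma glue_map_functional x y y' : glue_map x y -> glue_map x y' -> y = y'.
Proof.
  destruct HS as [U1 _ F0 Ff _ _ _ _ _].
  destruct Hresp as [[_ [_ [_ [_ [_ [_ [_ [_ [_ [Zf _]]]]]]]]]] _].
  intros [[z [w [Ex [Ey Hg]]]]|[Hxy _]] [[z' [w' [Ex' [Ey' Hg']]]]|[Hxy' _]].
  - subst. apply U1 in Ex'. subst. f_equal. eapply Zf; eauto.
  - exfalso. apply (proj1 (F0 _ _ Hxy')). exists z; auto.
  - exfalso. apply (proj1 (F0 _ _ Hxy)). exists z'; auto.
  - eapply Ff; eauto.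
Qed.

Lemma glue_map_injective x x' y : glue_map x y -> glue_map x' y -> x = x'.
Proof.
  destruct HS as [_ U2 F0 _ Fi _ _ _ _].
  destruct Hresp as [[_ [_ [_ [_ [_ [_ [_ [_ [_ [_ [Zi _]]]]]]]]]]] _].
  intros [[z [w [Ex [Ey Hg]]]]|[Hxy _]] [[z' [w' [Ex' [Ey' Hg']]]]|[Hxy' _]].
  - subst. apply U2 in Ey'. subst. f_equal. eapply Zi; eauto.
  - exfalso. apply (proj2 (F0 _ _ Hxy')). exists w. auto.
  - exfalso. apply (proj2 (F0 _ _ Hxy)). exists w'. auto.
  - eapply Fi; eauto.
Qed.

Lemma glue_map_preserves_qf : preserves_qf L1 L2 glue_map.
Proof.
  destruct HS as [_ _ F0 _ _ _ _ HQ Hrest].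
  destruct Hresp as [[_ [_ [_ [_ [_ [_ [_ [_ [_ [_ [_ [_ [Zp _]]]]]]]]]]]]] _].
  intros s a b Hab. destruct (classic (exists i, ~ in_image u1 (a i))) as [Hex|Hex].
  - apply Hrest; auto. intro i. destruct (Hab i) as [[z [w [Ex [Ey Hg]]]]|[Hxy _]].
    + left. split; [exists z|exists w]; auto.
    + right. auto.
  - assert (cw : forall i, exists zw : carrier Z1 * carrier Z2,
               a i = u1 (fst zw) /\ b i = u2 (snd zw) /\ gg sZ' (fst zw) (snd zw)).
    { intro i. destruct (Hab i) as [[z [w [Ex [Ey Hg]]]]|[Hxy _]].
      - exists (z, w). auto.
      - exfalso. apply Hex. exists i. apply (F0 _ _ Hxy). }
    set (pz := choice_fun cw).
    assert (Ea : a = fun i => u1 (fst (pz i)))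
      by (apply functional_extensionality; intro i; apply (choice_fun_spec cw i)).
    assert (Eb : b = fun i => u2 (snd (pz i)))
      by (apply functional_extensionality; intro i; apply (choice_fun_spec cw i)).
    rewrite Ea, Eb. apply (HQ (gg sZ') Zp). intro i; apply (choice_fun_spec cw i).
Qed.

Lemma glue_h1_old x : gA1 sL x -> glue_h1 x = gh1 sL x.
Proof.
  destruct Hresp as [[_ [_ [_ [_ [E5 _]]]]] _].
  intros H. destruct (classic (in_image u1 x)) as [[z Hz]|Hq].
  - subst x. rewrite glue_h1_image.
    assert (Hz : gA1 sZ z) by (apply (gs_dom1 _ _ _ _ _ HC); auto).
    rewrite E5, (gs_height1 _ _ _ _ _ HC); auto.
  - destruct (sd_total1 _ _ _ _ _ _ _ HS x Hq) as [y Hy].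
    rewrite (glue_h1_rest x y Hy). apply classic_if_true; auto.
Qed.

Lemma glue_h1_new x : A' x -> ~ gA1 sL x -> S (gn sL) <= glue_h1 x.
Proof.
  destruct Hresp as [_ [_ [_ [G3 _]]]].
  intros H1 H2. destruct (classic (in_image u1 x)) as [[z Hz]|Hq].
  - subst x. rewrite glue_h1_image, <- (gs_round _ _ _ _ _ HC).
    apply G3; [exact H1|]. intro H. apply H2, (gs_dom1 _ _ _ _ _ HC), H.
  - destruct (sd_total1 _ _ _ _ _ _ _ HS x Hq) as [y Hy].
    rewrite (glue_h1_rest x y Hy), classic_if_false by auto. unfold classic_if.
    destruct (excluded_middle_informative _); lia.
Qed.

Lemma glue_h2_old y : gA2 sL y -> glue_h2 y = gh2 sL y.
Proof.
  destruct Hresp as [[_ [_ [_ [_ [_ [E6 _]]]]]] _].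
  intros H. destruct (classic (in_image u2 y)) as [[w Hw]|Hq].
  - subst y. rewrite glue_h2_image.
    assert (Hw : gA2 sZ w) by (apply (gs_dom2 _ _ _ _ _ HC); auto).
    rewrite E6, (gs_height2 _ _ _ _ _ HC); auto.
  - rewrite glue_h2_rest by auto. apply classic_if_true; auto.
Qed.

Lemma glue_h2_bound x y : glue_map x y -> glue_h2 y < S (gn sL).
Proof.
  destruct Hresp as [[_ [_ [_ [_ [_ [_ [_ [_ [_ [_ [_ [_ [_ Zh]]]]]]]]]]]]] _].
  intros [[z [w [Ex [Ey Hg]]]]|[Hxy [HA Hh]]].
  - subst. rewrite glue_h2_image, <- glue_round. apply (Zh z w Hg).
  - rewrite glue_h2_rest by (apply (sd_rest _ _ _ _ _ _ _ HS _ _ Hxy)). unfold classic_if.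
    destruct (excluded_middle_informative _) as [H|H]; [|lia].
    pose proof (gs_rest_height _ _ _ _ _ HC x y Hxy HA H). lia.
Qed.

Lemma iso_resp1_glue : small Th A' ->
  iso_resp1 Th L1 L2 sL b' A' (answer1 sL b' A' glue_map glue_h1 glue_h2).
Proof.
  intro HsA'. apply iso_resp1_answer1; auto.
  - exact glue_map_extends.
  - exact glue_map_dom.
  - exact glue_map_functional.
  - exact glue_map_injective.
  - exact glue_map_preserves_qf.
  - exact glue_h1_old.
  - exact glue_h1_new.
  - exact glue_h2_old.
  - exact glue_h2_bound.
Qed.

Lemma glue_map_image2 w x : glue_map x (u2 w) -> exists z, x = u1 z /\ gg sZ' z w.
Proof.
  intros [[z [w' [Ex [Ey Hg]]]]|[Hxy _]].
  - apply (sd_inj2 _ _ _ _ _ _ _ HS) in Ey. subst. eauto.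
  - exfalso. apply (proj2 (sd_rest _ _ _ _ _ _ _ HS _ _ Hxy)). exists w; auto.
Qed.

Lemma glued_states_glue :
  glued_states u1 u2 fr sZ' (answer1 sL b' A' glue_map glue_h1 glue_h2).
Proof.
  destruct HC as [_ _ _ C4 _ _ _ _ _ C10].
  destruct Hresp as [[_ [E2 _]] [G1 [G2 _]]].
  split; simpl.
  - exact glue_round.
  - exact E2.
  - intro z. symmetry. apply G1.
  - intro w. rewrite G2. split.
    + intros [H|[x H]]; [left; apply C4; auto|right].
      destruct (glue_map_image2 w x H) as [z [_ Hz]]; eauto.
    + intros [H|[z H]]; [left; apply C4; auto|right; exists (u1 z); left; eauto].
  - intros z _. apply glue_h1_image.
  - intros w _. apply glue_h2_image.
  - intros z w. split.
    + intros H. destruct (glue_map_image2 w _ H) as [z' [Ez Hz]].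
      apply (sd_inj1 _ _ _ _ _ _ _ HS) in Ez. subst; auto.
    + intro H. left; eauto.
  - intros x y [[z [w [Ex [Ey Hg]]]]|[Hxy _]]; split; intro H.
    + exists w; auto.
    + exists z; auto.
    + exfalso; apply (proj1 (sd_rest _ _ _ _ _ _ _ HS _ _ Hxy)), H.
    + exfalso; apply (proj2 (sd_rest _ _ _ _ _ _ _ HS _ _ Hxy)), H.
  - intros x y [[z [w [Ex [Ey Hg]]]]|[Hxy _]] Hq; [exfalso; apply Hq; exists z; auto|exact Hxy].
  - intros x y Hxy HA1 HA2.
    assert (Hfx : ~ in_image u2 y) by (apply (sd_rest _ _ _ _ _ _ _ HS _ _ Hxy)).
    rewrite (glue_h2_rest y Hfx), (glue_h1_rest x y Hxy).
    assert (Hpaired : ~ gA2 sL y -> gA1 sL x /\ gh1 sL x < S (gn sL)).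
    { intro H. destruct HA2 as [H'|[x' Hx']]; [contradiction|].
      destruct Hx' as [[z [w [Ex [Ey Hg]]]]|[Hxy' [HA1' Hh]]].
      - exfalso. apply Hfx. exists w; auto.
      - assert (x' = x) by (eapply (sd_injective _ _ _ _ _ _ _ HS); eauto). subst x'. auto. }
    destruct (classic (gA1 sL x)) as [H1|H1]; destruct (classic (gA2 sL y)) as [H2|H2].
    + rewrite !classic_if_true by auto. pose proof (C10 x y Hxy H1 H2). lia.
    + rewrite classic_if_true, classic_if_false by auto. destruct (Hpaired H2). lia.
    + rewrite classic_if_false, !classic_if_true by auto. lia.
    + exfalso. destruct (Hpaired H2). contradiction.
Qed.
End Answer.

Lemma glued_invariant_side1 sL b' A' :
  glued_invariant Th R u1 u2 fr sL -> ais_legal1 Th R L1 L2 sL b' A' ->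
  exists sL', iso_resp1 Th L1 L2 sL b' A' sL' /\ glued_invariant Th R u1 u2 fr sL'.
Proof.
  intros [HsL [sZ [Hw [HsZ HC]]]] [Hb [HA' HsA']].
  set (AZ' := fun z => A' (u1 z)).
  assert (HLZ : ais_legal1 Th R Z1 Z2 sZ b' AZ').
  { split; [rewrite (gs_ordinal _ _ _ _ _ HC); exact Hb|]. split.
    - intros z H. apply HA', (gs_dom1 _ _ _ _ _ HC), H.
    - destruct HsA' as [k Hk].
      exists (fun p : {z | AZ' z} => k (exist (fun x => A' x) (u1 (proj1_sig p)) (proj2_sig p))).
      intros [a Ha] [b Hb'] E. apply Hk in E. injection E; intro E'.
      apply (sd_inj1 _ _ _ _ _ _ _ HS) in E'. apply sig_eq; exact E'. }
  destruct (proj1 (iso_wins_inv Th R _ _ sZ Hw) b' AZ' HLZ) as [sZ' [Hresp Hw']].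
  pose proof (iso_resp1_glue sL sZ sZ' b' A' HsL HC Hresp HA' HsA') as HL.
  eexists. split; [exact HL|]. split; [apply HL|].
  exists sZ'. split; [exact Hw'|]. split; [apply Hresp|].
  apply (glued_states_glue sL sZ); auto.
Qed.
End GlueMove.

Lemma glued_invariant_swap (Th : Type) {A : Type} (R : A -> A -> Prop) (wf : well_founded R)
  {V V' : Type} {ar : V -> nat} {ar' : V' -> nat}
  (Z1 Z2 : structure V' ar') (L1 L2 : structure V ar) u1 u2 fr
  (HS : sum_decomposition Z1 Z2 L1 L2 u1 u2 fr) (sL : @gstate A _ _ L1 L2) :
  glued_invariant Th R u1 u2 fr sL ->
  glued_invariant Th R u2 u1 (fun y x => fr x y) (swap_state sL).
Proof.
  intros [Hs [sZ [Hw [HsZ HC]]]]. split; [apply is_state_swap; auto|].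
  exists (swap_state sZ). split; [apply iso_wins_swap; auto|].
  split; [apply is_state_swap; auto|]. apply glued_states_swap; auto.
Qed.

Theorem E0_sum_decomposition (Th : Type) (Hn : card_le nat Th) {A : Type}
  (R : A -> A -> Prop) (wf : well_founded R)
  {V V' : Type} {ar : V -> nat} {ar' : V' -> nat}
  (Z1 Z2 : structure V' ar') (L1 L2 : structure V ar)
  (u1 : carrier Z1 -> carrier L1) (u2 : carrier Z2 -> carrier L2)
  (fr : carrier L1 -> carrier L2 -> Prop) :
  sum_decomposition Z1 Z2 L1 L2 u1 u2 fr -> E0 Th R Z1 Z2 -> E0 Th R L1 L2.
Proof.
  intros HS [HZs HZw].
  assert (HLs : is_state Th L1 L2 (@start A _ _ L1 L2)).
  { apply start_is_state. intros s a b Hab.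
    set (a' := fun i => False_rect (carrier Z1) (Hab i)).
    set (b' := fun i => False_rect (carrier Z2) (Hab i)).
    assert (Ea : a = fun i => u1 (a' i))
      by (apply functional_extensionality; intro i; destruct (Hab i)).
    assert (Eb : b = fun i => u2 (b' i))
      by (apply functional_extensionality; intro i; destruct (Hab i)).
    rewrite Ea, Eb. apply (sd_rel_image _ _ _ _ _ _ _ HS (fun _ _ => False)); auto.
    apply HZs. }
  split; [exact HLs|].
  pose proof (sum_decomposition_sym _ _ _ _ _ _ _ HS) as HS'.
  apply (iso_wins_of_sym_invariant Th R wf L1 L2
           (glued_invariant Th R u1 u2 fr) (glued_invariant Th R u2 u1 (fun y x => fr x y))).
  - apply glued_invariant_swap; auto.
  - apply (glued_invariant_side1 Th Hn R Z1 Z2 L1 L2 u1 u2 fr HS).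
  - apply (glued_invariant_side1 Th Hn R Z2 Z1 L2 L1 u2 u1 _ HS').
  - intros t Ht. exact (glued_invariant_swap Th R wf _ _ _ _ _ _ _ HS' t Ht).
  - split; [exact HLs|]. exists (@start A _ _ Z1 Z2). split; [exact HZw|].
    split; [exact HZs|]. split; simpl; tauto.
Qed.

Definition empty_model : structure Empty_set empty_ar :=
  {| carrier := Empty_set; rel := fun (e : Empty_set) _ => match e return Prop with end |}.

Lemma E0_empty_model (Th : Type) (Hn : card_le nat Th) {A : Type} (R : A -> A -> Prop)
  (wf : well_founded R) : E0 Th R empty_model empty_model.
Proof.
  assert (Hs : is_state Th empty_model empty_model (@start A _ _ empty_model empty_model))
    by (apply start_is_state, preserves_qf_empty_vocab).
  split; [exact Hs|].
  apply (iso_wins_of_invariant Th R wf _ _ (is_state Th empty_model empty_model));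
    [| |exact Hs].
  - intros s b' A' HI [_ [HA' HsA']].
    pose proof (iso_resp1_answer1 Th Hn empty_model empty_model s b' A' (fun _ _ => False)
                  (fun _ => 0) (fun _ => 0) HI HA' HsA') as Hr.
    eexists. split; [apply Hr|apply Hr]; intros; simpl in *;
      try match goal with x : Empty_set |- _ => destruct x end;
      try apply preserves_qf_empty_vocab.
  - intros s b' A' HI [_ [HA' HsA']].
    pose proof (iso_resp2_answer2 Th Hn empty_model empty_model s b' A' (fun _ _ => False)
                  (fun _ => 0) (fun _ => 0) HI HA' HsA') as Hr.
    eexists. split; [apply Hr|apply Hr]; intros; simpl in *;
      try match goal with x : Empty_set |- _ => destruct x end;
      try apply preserves_qf_empty_vocab.
Qed.

(* an isomorphism is a sum decomposition over empty [Z]'s *)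
Lemma E0_isomorphic (Th : Type) (Hn : card_le nat Th) {A : Type} (R : A -> A -> Prop)
  (wf : well_founded R) {V : Type} {ar : V -> nat} (K1 K2 : structure V ar) :
  isomorphic K1 K2 -> E0 Th R K1 K2.
Proof.
  intros [f [g [H1 [H2 H3]]]].
  apply (E0_sum_decomposition Th Hn R wf empty_model empty_model K1 K2
           (fun e => match e with end) (fun e => match e with end) (fun x y => y = f x));
    [|apply E0_empty_model; auto].
  split.
  - intros [].
  - intros [].
  - intros x y _. split; intros [[] _].
  - intros x y y' E E'. congruence.
  - intros x x' y E E'. rewrite <- (H1 x), <- (H1 x'). congruence.
  - intros x _. exists (f x). reflexivity.
  - intros y _. exists (g y). symmetry. apply H2.
  - intros gz _ s a' b' _.
    assert (E : (fun i => f (match a' i return carrier K1 with end)) =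
                (fun i => match b' i return carrier K2 with end))
      by (apply functional_extensionality; intro i; destruct (a' i)).
    rewrite H3, E. tauto.
  - intros s a b Hab _. assert (E : b = fun i => f (a i)).
    { apply functional_extensionality. intro i. destruct (Hab i) as [[[[] _] _]|E]; auto. }
    rewrite E. apply H3.
Qed.

Definition relativized {V V' : Type} {ar : V -> nat} (K : structure V ar) (pP : V)
  (kap : V' -> V) : structure V' (fun v' => ar (kap v')) :=
  {| carrier := {x : carrier K | rel K pP (fun _ => x)};
     rel := fun v' t => rel K (kap v') (fun i => proj1_sig (t i)) |}.

Definition relativized_state {A V V' : Type} {ar : V -> nat} {K1 K2 : structure V ar}
  (pP : V) (kap : V' -> V) (s : @gstate A _ _ K1 K2) :
  gstate (relativized K1 pP kap) (relativized K2 pP kap) :=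
  Build_gstate (relativized K1 pP kap) (relativized K2 pP kap)
    (fun x => gA1 s (proj1_sig x)) (fun y => gA2 s (proj1_sig y))
    (fun x => gh1 s (proj1_sig x)) (fun y => gh2 s (proj1_sig y))
    (fun x y => gg s (proj1_sig x) (proj1_sig y)) (gb s) (gn s).

Section Relativization.
Context (Th : Type) {A : Type} (R : A -> A -> Prop) (wf : well_founded R)
  {V V' : Type} {ar : V -> nat} (pP : V) (kap : V' -> V).

Definition in_pP {K : structure V ar} (x : carrier K) := rel K pP (fun _ => x).

(* ISO copies the play of the full structures; as [g] preserves [pP], it stays
   inside [pP]. *)
Definition relativized_invariant {K1 K2 : structure V ar}
  (t : gstate (relativized K1 pP kap) (relativized K2 pP kap)) : Prop :=
  exists s : @gstate A _ _ K1 K2, iso_wins Th R K1 K2 s /\ is_state Th K1 K2 s /\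
    (forall x, gA1 s x -> in_pP x) /\ (forall y, gA2 s y -> in_pP y) /\
    t = relativized_state pP kap s.

Lemma is_state_relativized (K1 K2 : structure V ar) (s : @gstate A _ _ K1 K2) :
  is_state Th K1 K2 s ->
  is_state Th (relativized K1 pP kap) (relativized K2 pP kap) (relativized_state pP kap s).
Proof.
  intros [H1 [H2 [H3 [H4 [H5 [H6 H7]]]]]].
  split; [|split; [|split; [|split; [|split; [|split]]]]]; simpl.
  - destruct H1 as [k Hk].
    exists (fun p => k (exist (fun x => gA1 s x) (proj1_sig (proj1_sig p)) (proj2_sig p))).
    intros a b E. apply Hk in E. injection E; intro E'. apply sig_eq, sig_eq, E'.
  - destruct H2 as [k Hk].
    exists (fun p => k (exist (fun x => gA2 s x) (proj1_sig (proj1_sig p)) (proj2_sig p))).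
    intros a b E. apply Hk in E. injection E; intro E'. apply sig_eq, sig_eq, E'.
  - intros x y y' Ha Hb. apply sig_eq. eapply H3; eauto.
  - intros x x' y Ha Hb. apply sig_eq. eapply H4; eauto.
  - intros x y H. apply H5, H.
  - intros v a b H. simpl. apply H6. exact H.
  - intros x y H. apply H7, H.
Qed.

Lemma relativized_invariant_side1 (K1 K2 : structure V ar) t b' A' :
  @relativized_invariant K1 K2 t -> ais_legal1 Th R _ _ t b' A' ->
  exists t', iso_resp1 Th _ _ t b' A' t' /\ @relativized_invariant K1 K2 t'.
Proof.
  intros [s [Hw [Hs [P1 [P2 Et]]]]] [Hb [HA' HsA']]. subst t.
  set (A'' := fun x => exists H : in_pP x, A' (exist _ x H)).
  assert (HL : ais_legal1 Th R K1 K2 s b' A'').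
  { split; [exact Hb|]. split.
    - intros x H. exists (P1 x H). apply (HA' (exist _ x (P1 x H))). exact H.
    - apply (small_incl _ _ (fun x => exists y, A' y /\ proj1_sig y = x)).
      + intros x [H HA]. exists (exist _ x H). split; [exact HA|reflexivity].
      + apply small_image; [intros y x x' E E'; congruence|exact HsA']. }
  destruct (proj1 (iso_wins_inv Th R _ _ s Hw) b' A'' HL)
    as [s' [[[E1 [E2 [E3 [E4 [E5 [E6 [E7 E8]]]]]]] [G1 [G2 [G3 G4]]]] Hw']].
  pose proof E8 as Hs'. destruct E8 as [_ [_ [_ [_ [Zg [Zp _]]]]]].
  assert (P1' : forall x, gA1 s' x -> in_pP x).
  { intros x H. apply G1 in H. destruct H as [H _]. exact H. }
  assert (P2' : forall y, gA2 s' y -> in_pP y).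
  { intros y H. apply G2 in H. destruct H as [H|[x Hx]]; [apply P2, H|].
    assert (Hx1 : in_pP x) by (apply P1', (Zg x y Hx)).
    apply (Zp pP (fun _ => x) (fun _ => y)); auto. }
  exists (relativized_state pP kap s'). split.
  - split; [|split; [|split; [|split]]]; simpl.
    + do 7 (split; [simpl; auto|]). apply is_state_relativized; auto.
    + intros [x Hx]. simpl. rewrite G1. unfold A''. split.
      * intros [H HA]. replace Hx with H by apply proof_irrelevance. exact HA.
      * intro HA. exists Hx. exact HA.
    + intros [y Hy]. simpl. rewrite G2. split.
      * intros [H|[x Hx']]; [left; exact H|]. right.
        exists (exist _ x (P1' x (proj1 (Zg x y Hx')))). exact Hx'.
      * intros [H|[[x Hx] Hx']]; [left; exact H|right; exists x; exact Hx'].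
    + intros [x Hx] HA HnA. simpl in *. apply G3; auto. exists Hx. exact HA.
    + intros [x Hx]. simpl. rewrite <- G4. split.
      * intros [[y Hy] H]. exists y. exact H.
      * intros [y H]. exists (exist _ y (P2' y (proj2 (Zg x y H)))). exact H.
  - exists s'.
    split; [exact Hw'|split; [exact Hs'|split; [exact P1'|split; [exact P2'|reflexivity]]]].
Qed.

Lemma relativized_invariant_swap (K1 K2 : structure V ar) t :
  @relativized_invariant K1 K2 t -> @relativized_invariant K2 K1 (swap_state t).
Proof.
  intros [s [Hw [Hs [P1 [P2 E]]]]]. subst t. exists (swap_state s).
  split; [apply iso_wins_swap; auto|]. split; [apply is_state_swap; auto|].
  split; [exact P2|]. split; [exact P1|]. reflexivity.
Qed.
End Relativization.

Theorem E0_relativized (Th : Type) {A : Type} (R : A -> A -> Prop) (wf : well_founded R)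
  {V V' : Type} {ar : V -> nat} (pP : V) (kap : V' -> V) (K1 K2 : structure V ar) :
  E0 Th R K1 K2 -> E0 Th R (relativized K1 pP kap) (relativized K2 pP kap).
Proof.
  intros [Hs Hw].
  split; [apply (is_state_relativized Th pP kap _ _ _ Hs)|].
  apply (iso_wins_of_sym_invariant Th R wf _ _ (relativized_invariant Th R pP kap)
           (relativized_invariant Th R pP kap)).
  - apply relativized_invariant_swap; auto.
  - apply relativized_invariant_side1.
  - apply relativized_invariant_side1.
  - apply relativized_invariant_swap; auto.
  - exists (@start A _ _ K1 K2).
    split; [exact Hw|split; [exact Hs|split; [simpl; tauto|split; [simpl; tauto|reflexivity]]]].
Qed.

Lemma E1_map {Th : Type} {A : Type} (R : A -> A -> Prop) {V V' : Type}
  {ar : V -> nat} {ar' : V' -> nat} (F : structure V ar -> structure V' ar') :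
  (forall a b, E0 Th R a b -> E0 Th R (F a) (F b)) ->
  forall x y, E1 Th R x y -> E1 Th R (F x) (F y).
Proof.
  intros HF x y H. induction H.
  - apply rst_step. apply HF; auto.
  - apply rst_refl.
  - apply rst_sym; auto.
  - eapply rst_trans; eauto.
Qed.

Lemma isomorphic_sym {V : Type} {ar : V -> nat} (N1 N2 : structure V ar) :
  isomorphic N1 N2 -> isomorphic N2 N1.
Proof.
  intros [f [g [H1 [H2 H3]]]]. exists g, f. split; auto. split; auto.
  intros s t. rewrite H3. replace (fun i => f (g (t i))) with t; [tauto|].
  apply functional_extensionality; intro i; rewrite H2; auto.
Qed.

Lemma isomorphic_reduct {V : Type} {ar : V -> nat} (S : V -> Prop) (N1 N2 : structure V ar) :
  isomorphic N1 N2 -> isomorphic (reduct S N1) (reduct S N2).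
Proof.
  intros [f [g [H1 [H2 H3]]]]. exists f, g. split; auto. split; auto.
  intros s t. simpl. apply H3.
Qed.

Lemma fin1_const {T : Type} (t : Fin.t 1 -> T) (i : Fin.t 1) : t = fun _ => t i.
Proof.
  assert (fin1_eq : forall j : Fin.t 1, j = Fin.F1).
  { intro j. apply (Fin.caseS' j (fun j => j = Fin.F1)); [reflexivity|].
    intro p. apply (Fin.case0 (fun p => Fin.FS p = Fin.F1) p). }
  apply functional_extensionality. intro j. rewrite (fin1_eq i), (fin1_eq j). reflexivity.
Qed.

Lemma inl_tuple_inj {n : nat} {T X : Type} (a b : Fin.t n -> T) :
  (fun i => @inl T X (a i)) = (fun i => inl (b i)) -> a = b.
Proof.
  intro E. apply functional_extensionality. intro i.
  assert (E' := f_equal (fun F => F i) E). simpl in E'. injection E'; auto.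
Qed.

(* [Z] together with the new elements [X] outside [P] (the symbol [None]) *)
Definition padded {V1 : Type} {ar1 : V1 -> nat} (tau : option V1 -> Prop) (X : Type)
  (Z : structure {q : V1 | tau (Some q)} (fun s => ar1 (proj1_sig s)))
  : structure {o : option V1 | tau o} (fun s => ext_ar ar1 (proj1_sig s)) :=
  {| carrier := (carrier Z + X)%type;
     rel := fun w => match w as w0 return
              ((Fin.t (ext_ar ar1 (proj1_sig w0)) -> (carrier Z + X)%type) -> Prop) with
      | exist _ o H => match o as o0 return
              (tau o0 -> (Fin.t (ext_ar ar1 o0) -> (carrier Z + X)%type) -> Prop) with
          | Some q => fun H t => exists t', t = (fun i => inl (t' i)) /\ rel Z (exist _ q H) t'
          | None => fun _ t => exists t', t = (fun i => inl (t' i))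
          end H
      end |}.

Lemma E0_padded (Th : Type) (Hn : card_le nat Th) {A : Type} (R : A -> A -> Prop)
  (wf : well_founded R) {V1 : Type} {ar1 : V1 -> nat} (tau : option V1 -> Prop) (X : Type)
  (Z1 Z2 : structure {q : V1 | tau (Some q)} (fun s => ar1 (proj1_sig s))) :
  E0 Th R Z1 Z2 -> E0 Th R (padded tau X Z1) (padded tau X Z2).
Proof.
  apply (E0_sum_decomposition Th Hn R wf Z1 Z2 (padded tau X Z1) (padded tau X Z2) inl inl
           (fun p q => exists x, p = inr x /\ q = inr x)).
  assert (NQ : forall (Z : Type) (x : X), ~ in_image (@inl Z X) (inr x))
    by (intros Z x [z E]; discriminate).
  split.
  - intros a b E; injection E; auto.
  - intros a b E; injection E; auto.
  - intros p q [x [E1 E2]]; subst; split; apply NQ.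
  - intros p q q' [x [E1 E2]] [x' [E1' E2']]; subst; congruence.
  - intros p p' q [x [E1 E2]] [x' [E1' E2']]; subst; congruence.
  - intros [z|x] H; [exfalso; apply H; exists z; auto|exists (inr x); exists x; auto].
  - intros [z|x] H; [exfalso; apply H; exists z; auto|exists (inr x); exists x; auto].
  - intros gz Hgz [[q|] H] a' b' Hab; simpl.
    + split.
      * intros [t' [E Hr]]. apply inl_tuple_inj in E. subst t'. exists b'. split; auto.
        apply (Hgz (exist _ q H) a' b' Hab). exact Hr.
      * intros [t' [E Hr]]. apply inl_tuple_inj in E. subst t'. exists a'. split; auto.
        apply (Hgz (exist _ q H) a' b' Hab). exact Hr.
    + split; intros _; eexists; reflexivity.
  - intros s a b Hab [i Hi].
    assert (Ha : forall t', a <> (fun i => inl (t' i))).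
    { intros t' E. apply Hi. rewrite E. exists (t' i); reflexivity. }
    assert (Hb : forall t', b <> (fun i => inl (t' i))).
    { intros t' E. destruct (Hab i) as [[H1 H2]|[x [E1 E2]]]; [contradiction|].
      assert (E' := f_equal (fun F => F i) E). simpl in E'. rewrite E2 in E'. discriminate. }
    destruct s as [[q|] H]; simpl; split.
    + intros [t' [E _]]. exfalso; eapply Ha; eauto.
    + intros [t' [E _]]. exfalso; eapply Hb; eauto.
    + intros [t' E]. exfalso; eapply Ha; eauto.
    + intros [t' E]. exfalso; eapply Hb; eauto.
Qed.

Section Relativize.
Context {V1 : Type} {ar1 : V1 -> nat}.

Definition pad_model (N : structure V1 ar1) (X : Type) : structure (option V1) (ext_ar ar1) :=
  {| carrier := (carrier N + X)%type;
     rel := fun o => match o as o0 return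
              ((Fin.t (ext_ar ar1 o0) -> (carrier N + X)%type) -> Prop) with
       | Some q => fun t => exists t', t = (fun i => inl (t' i)) /\ rel N q t'
       | None => fun t => exists t', t = (fun i => inl (t' i)) end |}.

Lemma reduct_pad_model (tau : option V1 -> Prop) (N : structure V1 ar1) (X : Type) :
  reduct tau (pad_model N X) = padded tau X (reduct (fun q => tau (Some q)) N).
Proof.
  unfold reduct, padded. simpl. f_equal.
  apply functional_extensionality_dep. intros [[q|] H]; reflexivity.
Qed.

Lemma isomorphic_relativize_pad_model (N : structure V1 ar1) (X : Type) :
  isomorphic N (relativize (pad_model N X)).
Proof.
  set (Mf := pad_model N X).
  assert (noinr : forall x, predP Mf (inr x) -> False).
  { intros x [t' E]. assert (E' := f_equal (fun F => F Fin.F1) E). discriminate. }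
  set (fN := fun n : carrier N =>
               exist (fun z => predP Mf z) (inl n) (ex_intro _ (fun _ => n) eq_refl)).
  set (gN := fun z : {z | predP Mf z} => match z with exist _ p H =>
               match p as p0 return (predP Mf p0 -> carrier N) with
               | inl n => fun _ => n | inr x => fun H => False_rect _ (noinr x H) end H end).
  exists fN, gN. split; [intro x; reflexivity|]. split.
  - intros [[n|x] H]; simpl; [apply sig_eq; reflexivity|destruct (noinr x H)].
  - intros q t. simpl. split.
    + intro Hr. exists t. split; auto.
    + intros [t' [E Hr]]. apply inl_tuple_inj in E. subst. exact Hr.
Qed.

Lemma isomorphic_reduct_padded (tau : option V1 -> Prop) (M0 : structure (option V1) (ext_ar ar1))
  (Hin : forall q (t : Fin.t (ar1 q) -> carrier M0), rel M0 (Some q) t ->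
         forall i, predP M0 (t i)) :
  isomorphic (reduct tau M0)
    (padded tau {x : carrier M0 | ~ predP M0 x}
       (reduct (fun q => tau (Some q)) (relativize M0))).
Proof.
  set (f := fun x : carrier M0 => match excluded_middle_informative (predP M0 x) with
            | left H => @inl {x | predP M0 x} {x | ~ predP M0 x} (exist _ x H)
            | right H => inr (exist _ x H) end).
  set (g := fun p : ({x | predP M0 x} + {x | ~ predP M0 x})%type =>
            match p with inl y => proj1_sig y | inr y => proj1_sig y end).
  assert (fP : forall x (H : predP M0 x), f x = inl (exist _ x H)).
  { intros x H. unfold f. destruct (excluded_middle_informative (predP M0 x)) as [H'|H'];
    [f_equal; apply sig_eq; reflexivity|contradiction]. }
  assert (gf : forall x, g (f x) = x).
  { intro x. unfold f. destruct (excluded_middle_informative (predP M0 x)); reflexivity. }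
  assert (f_inl : forall n (t : Fin.t n -> carrier M0) t',
            (fun i => f (t i)) = (fun i => inl (t' i)) -> t = (fun i => proj1_sig (t' i))).
  { intros n t t' E. apply functional_extensionality. intro i.
    assert (E' := f_equal (fun F => g (F i)) E). simpl in E'. rewrite gf in E'. exact E'. }
  assert (f_P : forall n (t : Fin.t n -> carrier M0) (H : forall i, predP M0 (t i)),
            (fun i => f (t i)) = (fun i => inl (exist _ (t i) (H i)))).
  { intros n t H. apply functional_extensionality. intro i. apply fP. }
  exists f, g. split; [exact gf|]. split.
  - intros [[x Hx]|[x Hx]]; simpl.
    + apply fP.
    + unfold f. destruct (excluded_middle_informative (predP M0 x)); [contradiction|].
      f_equal. apply sig_eq; reflexivity.
  - intros [[q|] H] t; simpl.
    + split.
      * intro Hr. pose proof (Hin q t Hr) as HP. exists (fun i => exist _ (t i) (HP i)).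
        split; [apply f_P|]. exact Hr.
      * intros [t' [E Hr]]. rewrite (f_inl _ t t' E). exact Hr.
    + split.
      * intro Hr. assert (HP : forall i, predP M0 (t i)).
        { intro i. exact (eq_rect _ (fun u => rel M0 None u) Hr _ (fin1_const t i)). }
        exists (fun i => exist _ (t i) (HP i)). exact (f_P _ t HP).
      * intros [t' E]. rewrite (f_inl _ t t' E).
        exact (eq_rect _ (fun u => rel M0 None u) (proj2_sig (t' Fin.F1)) _
                 (eq_sym (fin1_const (fun i => proj1_sig (t' i)) Fin.F1))).
Qed.

Context (Th : Type) (Hn : card_le nat Th) {A : Type} (R : A -> A -> Prop)
  (wf : well_founded R) (tau : option V1 -> Prop).

Lemma E1_relativize_reduct (pN : tau None) (M M' : structure (option V1) (ext_ar ar1)) :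
  E1 Th R (reduct tau M) (reduct tau M') ->
  E1 Th R (reduct (fun q => tau (Some q)) (relativize M))
          (reduct (fun q => tau (Some q)) (relativize M')).
Proof.
  set (kap := fun w : {q | tau (Some q)} => exist tau (Some (proj1_sig w)) (proj2_sig w)).
  (* relativizing to [P] commutes with taking reducts, definitionally *)
  change (E1 Th R (reduct tau M) (reduct tau M') ->
          E1 Th R (relativized (reduct tau M) (exist tau None pN) kap)
                  (relativized (reduct tau M') (exist tau None pN) kap)).
  apply (E1_map R (fun K => relativized K (exist tau None pN) kap)).
  intros a b Hab. exact (E0_relativized Th R wf _ kap a b Hab).
Qed.

Lemma E1_reduct_pad_model (N : structure V1 ar1) (M0 : structure (option V1) (ext_ar ar1))
  (Hin : forall q (t : Fin.t (ar1 q) -> carrier M0), rel M0 (Some q) t ->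
         forall i, predP M0 (t i)) :
  E1 Th R (reduct (fun q => tau (Some q)) N) (reduct (fun q => tau (Some q)) (relativize M0)) ->
  E1 Th R (reduct tau (pad_model N {x : carrier M0 | ~ predP M0 x})) (reduct tau M0).
Proof.
  intro HE. rewrite reduct_pad_model.
  apply rst_trans with (padded tau {x : carrier M0 | ~ predP M0 x}
                          (reduct (fun q => tau (Some q)) (relativize M0))).
  - apply (E1_map R (padded tau _)); [intros a b Hab; apply E0_padded; auto|exact HE].
  - apply rst_step, E0_isomorphic, isomorphic_sym, isomorphic_reduct_padded; auto.
Qed.
End Relativize.

Section Dullness.
Context (Th : Type) (Hn : card_le nat Th) (V1 : Type) (ar1 : V1 -> nat)
  (psi2 : sentence Th (option V1) (ext_ar ar1))
  (Hyp : forall M, sat M psi2 ->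
       (exists x, predP M x) /\
       (forall q (t : Fin.t (ar1 q) -> carrier M), rel M (Some q) t -> forall i, predP M (t i))).

(* if [P] is not in the vocabulary of [psi2], emptying [P] preserves [psi2] *)
Lemma no_model_without_P : ~ s_sub psi2 None -> forall M, ~ sat M psi2.
Proof.
  intros nN M [i Hi].
  set (M' := {| carrier := carrier M;
                rel := fun o => match o as o0 return
                         ((Fin.t (ext_ar ar1 o0) -> carrier M) -> Prop) with
                       | Some q => rel M (Some q) | None => fun _ => False end |}
             : structure (option V1) (ext_ar ar1)).
  assert (E : reduct (s_sub psi2) M' = reduct (s_sub psi2) M).
  { unfold reduct. f_equal. apply functional_extensionality_dep.
    intros [[q|] H]; [reflexivity|contradiction]. }
  assert (HM' : sat M' psi2) by (exists i; rewrite E; exact Hi).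
  destruct (Hyp M' HM') as [[x Hx] _]. exact Hx.
Qed.

Definition empty_sentence (o : ordinal_lt_succ Th) : sentence Th V1 ar1 :=
  {| s_sub := fun _ => False; s_sub_small := small_empty Th; s_ord := o;
     s_idx := Empty_set; s_idx_small := card_le_empty _; s_models := Empty_set_rect _ |}.

Let tau' := fun q => s_sub psi2 (Some q).
Let R2 := oR (s_ord psi2).

Definition realised_index :=
  {i : s_idx psi2 | exists M, E1 Th R2 (reduct (s_sub psi2) M) (s_models psi2 i)}.

Definition realising_model (j : realised_index) : structure (option V1) (ext_ar ar1) :=
  proj1_sig (constructive_indefinite_description _ (proj2_sig j)).

Lemma realising_model_spec j :
  E1 Th R2 (reduct (s_sub psi2) (realising_model j)) (s_models psi2 (proj1_sig j)).
Proof. exact (proj2_sig (constructive_indefinite_description _ (proj2_sig j))). Qed.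

Lemma small_tau' : small Th tau'.
Proof.
  destruct (s_sub_small _ _ _ psi2) as [k Hk].
  exists (fun p : {q | tau' q} =>
            k (exist (fun o => s_sub psi2 o) (Some (proj1_sig p)) (proj2_sig p))).
  intros [a Ha] [b Hb] E. apply Hk in E. injection E; intro E'. apply sig_eq. exact E'.
Qed.

Lemma card_le_realised_index :
  card_le realised_index (beth_succ Th (wo_wf _ _ (o_wo (s_ord psi2)))).
Proof.
  destruct (s_idx_small _ _ _ psi2) as [k Hk]. exists (fun j => k (proj1_sig j)).
  intros a b E. apply Hk in E. apply sig_eq, E.
Qed.

Definition relativized_sentence : sentence Th V1 ar1 :=
  {| s_sub := tau'; s_sub_small := small_tau'; s_ord := s_ord psi2;
     s_idx := realised_index; s_idx_small := card_le_realised_index;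
     s_models := fun j => reduct tau' (relativize (realising_model j)) |}.

Lemma sat_relativized_sentence (pN : s_sub psi2 None) (N : structure V1 ar1) :
  sat N relativized_sentence <-> exists M, sat M psi2 /\ isomorphic N (relativize M).
Proof.
  pose proof (wo_wf _ _ (o_wo (s_ord psi2))) as wf2. split.
  - intros [j HE]. simpl in HE.
    assert (satM0 : sat (realising_model j) psi2)
      by (exists (proj1_sig j); apply realising_model_spec).
    destruct (Hyp _ satM0) as [_ Hin].
    exists (pad_model N {x : carrier (realising_model j) | ~ predP (realising_model j) x}).
    split; [|apply isomorphic_relativize_pad_model].
    exists (proj1_sig j). eapply rst_trans; [|apply realising_model_spec].
    apply E1_reduct_pad_model; auto.
  - intros [M [[i HM] Hiso]].
    exists (exist _ i (ex_intro _ M HM) : realised_index). simpl.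
    apply rst_trans with (reduct tau' (relativize M)).
    + apply rst_step, E0_isomorphic, isomorphic_reduct; auto.
    + apply E1_relativize_reduct; auto.
      apply rst_trans with (s_models psi2 i); [exact HM|].
      apply rst_sym, (realising_model_spec (exist _ i (ex_intro _ M HM))).
Qed.
End Dullness.

Theorem dullness_elimination_infinite (Th : Type) (Hn : card_le nat Th) :
  dullness_elimination Th.
Proof.
  intros V1 ar1 psi2 Hyp.
  destruct (classic (s_sub psi2 None)) as [pN|nN].
  - exists (relativized_sentence Th V1 ar1 psi2).
    apply sat_relativized_sentence; auto.
  - exists (empty_sentence Th V1 ar1 (s_ord psi2)). intro N. split.
    + intros [[] _].
    + intros [M [HM _]]. exfalso. exact (no_model_without_P Th V1 ar1 psi2 Hyp nN M HM).
Qed.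

Theorem claim3p9 (Theta : Type) (Hinf : infinite_card Theta) :
  dullness_elimination Theta /\
  (forall M1 M2 : structure Empty_set empty_ar,
     ~ card_le (carrier M1) Theta -> ~ card_le (carrier M2) Theta ->
     forall alpha : ordinal_lt_succ Theta, E1 Theta (oR alpha) M1 M2) /\
  (cof_omega Theta ->
   forall M1 M2 : structure Empty_set empty_ar,
     card_le Theta (carrier M1) -> card_le Theta (carrier M2) ->
     forall alpha : ordinal_lt_succ Theta, E1 Theta (oR alpha) M1 M2).
Proof.
  split; [apply dullness_elimination_infinite; exact Hinf|]. split.
  - intros M1 M2 H1 H2 alpha.
    apply E1_card_ge; auto; [exact (wo_wf _ _ (o_wo alpha))|..];
      apply not_card_le_card_le; assumption.
  - intros _ M1 M2 H1 H2 alpha. apply E1_card_ge; auto. exact (wo_wf _ _ (o_wo alpha)).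
Qed.
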